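(* For $M,N\in\Lambda$, if $M=_{\mathsf v}N$ then $\mathrm{NF}(\mathcal T(M))=\mathrm{NF}(\mathcal T(N))$.
   Context: Call-by-value $\lambda$-calculus with permutations: $\lambda$-terms and values are $M,N::=V\mid MN$, $V::=x\mid\lambda x.M$, up to $\alpha$-conversion. Rules: $(\beta_v)$ $(\lambda x.M)V\to M\{x:=V\}$ if $V$ is a value; $(\sigma_1)$ $(\lambda x.M)NP\to(\lambda x.MP)N$ if $x\notin\mathrm{FV}(P)$; $(\sigma_3)$ $V((\lambda x.M)N)\to(\lambda x.VM)N$ if $V$ is a value and $x\notin\mathrm{FV}(V)$. $\to_{\mathsf v}$ is their contextual closure and $=_{\mathsf v}$ its reflexive-symmetric-transitive closure. Resource calculus: resource values $v::=x\mid\lambda x.t$; simple terms $s,t::=st\mid[v_1,\dots,v_k]$ (bags are finite multisets); $[x^n]$ is $n$ copies of $x$. Linear substitution $e\langle x:=v_1,\dots,v_n\rangle$ is the set of terms obtained by replacing the $n$ free occurrences of $x$ in $e$ bijectively by $v_1,\dots,v_n$ (over all permutations), or $\emptyset$ if $x$ does not occur exactly $n$ times free. Constructors extend multilinearly to sets. Rules: $(\beta_r)$ $[\lambda x.t][v_1,\dots,v_n]\to t\langle x:=v_1,\dots,v_n\rangle$; $(0)$ $[v_1,\dots,v_n]t\to\emptyset$ if $n\ne1$; $(\sigma_1)$ $[\lambda x.t]s_1s_2\to[\lambda x.ts_2]s_1$ if $x\notin\mathrm{FV}(s_1)$; $(\sigma_3)$ $[v]([\lambda x.t]s)\to[\lambda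 x.[v]t]s$ if $x\notin\mathrm{FV}(v)$. $\to_{\mathsf r}$ is the closure of these rules under abstraction, both sides of application, elements of bags, and on finite sets ($e\to\mathcal E_1$, $e\notin\mathcal E_2$ imply $\{e\}\cup\mathcal E_2\to\mathcal E_1\cup\mathcal E_2$); it is confluent and strongly normalizing, $\mathrm{nf}(e)$ is the normal form and $\mathrm{NF}(\mathcal E)=\bigcup_{e\in\mathcal E}\mathrm{nf}(e)$. Taylor expansion: $\mathcal T(x)=\{[x^n]\mid n\ge0\}$, $\mathcal T(\lambda x.N)=\{[\lambda x.t_1,\dots,\lambda x.t_n]\mid n\ge0,\ t_i\in\mathcal T(N)\}$, $\mathcal T(PQ)=\{st\mid s\in\mathcal T(P),t\in\mathcal T(Q)\}$. *)

(* Terms of both calculi are represented with de Bruijn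
   indices, so alpha-conversion is built in. *)
From Stdlib Require Import List Permutation Relations Arith.
Import ListNotations.

Inductive lterm : Type :=
| LVar : nat -> lterm
| LLam : lterm -> lterm
| LApp : lterm -> lterm -> lterm.

Definition is_value (M : lterm) : Prop :=
  match M with LApp _ _ => False | _ => True end.

Fixpoint llift (k c : nat) (M : lterm) : lterm :=
  match M with
  | LVar m => if c <=? m then LVar (m + k) else LVar m
  | LLam N => LLam (llift k (S c) N)
  | LApp P Q => LApp (llift k c P) (llift k c Q)
  end.

(* lsubst d V M : M{d := V}, where V lives in the context with index d
   removed; indices above d are decremented. *)
Fixpoint lsubst (d : nat) (V M : lterm) : lterm :=
  match M with
  | LVar m => if m =? d then llift d 0 V
              else if d <? m then LVar (pred m) else LVar m
  | LLam N => LLam (lsubst (S d) V N)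
  | LApp P Q => LApp (lsubst d V P) (lsubst d V Q)
  end.

(* The side conditions x notin FV(P), x notin FV(V) of sigma_1/sigma_3 are
   the usual variable conventions; in de Bruijn form they become the
   lifting of P (resp. V) when it is moved under the binder. *)
Inductive vstep : lterm -> lterm -> Prop :=
| vs_beta M V : is_value V -> vstep (LApp (LLam M) V) (lsubst 0 V M)
| vs_sigma1 M N P :
    vstep (LApp (LApp (LLam M) N) P) (LApp (LLam (LApp M (llift 1 0 P))) N)
| vs_sigma3 V M N : is_value V ->
    vstep (LApp V (LApp (LLam M) N)) (LApp (LLam (LApp (llift 1 0 V) M)) N)
| vs_lam M M' : vstep M M' -> vstep (LLam M) (LLam M')
| vs_appl M M' N : vstep M M' -> vstep (LApp M N) (LApp M' N)
| vs_appr M N N' : vstep N N' -> vstep (LApp M N) (LApp M N').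

Definition veq : lterm -> lterm -> Prop := clos_refl_sym_trans lterm vstep.

(* simple terms, resource values, bags.  Bags are represented by lists;
   being multisets they are identified up to permutation by [req] below. *)
Inductive rterm : Type :=
| RApp : rterm -> rterm -> rterm
| RBag : rbag -> rterm
with rval : Type :=
| RVar : nat -> rval
| RLam : rterm -> rval
with rbag : Type :=
| BNil : rbag
| BCons : rval -> rbag -> rbag.

Fixpoint bag_list (b : rbag) : list rval :=
  match b with BNil => [] | BCons v b' => v :: bag_list b' end.

Definition sing (v : rval) : rbag := BCons v BNil.

Fixpoint rlift (k c : nat) (t : rterm) : rterm :=
  match t with
  | RApp s u => RApp (rlift k c s) (rlift k c u)
  | RBag b => RBag (blift k c b)
  end
with vlift (k c : nat) (v : rval) : rval :=
  match v with
  | RVar m => if c <=? m then RVar (m + k) else RVar m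
  | RLam t => RLam (rlift k (S c) t)
  end
with blift (k c : nat) (b : rbag) : rbag :=
  match b with
  | BNil => BNil
  | BCons v b' => BCons (vlift k c v) (blift k c b')
  end.

Inductive req : rterm -> rterm -> Prop :=
| req_app s s' u u' : req s s' -> req u u' -> req (RApp s u) (RApp s' u')
| req_bag b b' : beq b b' -> req (RBag b) (RBag b')
with rveq : rval -> rval -> Prop :=
| rveq_var m : rveq (RVar m) (RVar m)
| rveq_lam t t' : req t t' -> rveq (RLam t) (RLam t')
with beq : rbag -> rbag -> Prop :=
| beq_nil : beq BNil BNil
| beq_cons v v' b b' : rveq v v' -> beq b b' -> beq (BCons v b) (BCons v' b')
| beq_swap v w b : beq (BCons v (BCons w b)) (BCons w (BCons v b))
| beq_trans b1 b2 b3 : beq b1 b2 -> beq b2 b3 -> beq b1 b3.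

(* Linear substitution: [lsub d t vs u] means u belongs to the set
   t<d := vs>, i.e. u is obtained by replacing the free occurrences of the
   variable d in t bijectively by the values of the multiset vs (and
   decrementing the other free indices > d).  When d does not occur exactly
   |vs| times, no u satisfies it (the empty set). *)
Inductive lsub : nat -> rterm -> list rval -> rterm -> Prop :=
| ls_app d s u vs vs1 vs2 s' u' :
    Permutation vs (vs1 ++ vs2) -> lsub d s vs1 s' -> lsub d u vs2 u' ->
    lsub d (RApp s u) vs (RApp s' u')
| ls_bag d b vs b' : lsubb d b vs b' -> lsub d (RBag b) vs (RBag b')
with lsubv : nat -> rval -> list rval -> rval -> Prop :=
| lsv_hit d v : lsubv d (RVar d) [v] (vlift d 0 v)
| lsv_lt d m : m < d -> lsubv d (RVar m) [] (RVar m)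
| lsv_gt d m : d < m -> lsubv d (RVar m) [] (RVar (pred m))
| lsv_lam d t vs t' : lsub (S d) t vs t' -> lsubv d (RLam t) vs (RLam t')
with lsubb : nat -> rbag -> list rval -> rbag -> Prop :=
| lsb_nil d : lsubb d BNil [] BNil
| lsb_cons d v b vs vs1 vs2 v' b' :
    Permutation vs (vs1 ++ vs2) -> lsubv d v vs1 v' -> lsubb d b vs2 b' ->
    lsubb d (BCons v b) vs (BCons v' b').

Definition rset := rterm -> Prop.

Inductive rstep : rterm -> rset -> Prop :=
| rs_beta t b :
    rstep (RApp (RBag (sing (RLam t))) (RBag b)) (fun u => lsub 0 t (bag_list b) u)
| rs_zero b u : length (bag_list b) <> 1 -> rstep (RApp (RBag b) u) (fun _ => False)
| rs_sigma1 t s1 s2 :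
    rstep (RApp (RApp (RBag (sing (RLam t))) s1) s2)
          (eq (RApp (RBag (sing (RLam (RApp t (rlift 1 0 s2))))) s1))
| rs_sigma3 v t s :
    rstep (RApp (RBag (sing v)) (RApp (RBag (sing (RLam t))) s))
          (eq (RApp (RBag (sing (RLam (RApp (RBag (sing (vlift 1 0 v))) t)))) s))
| rs_appl s S u : rstep s S -> rstep (RApp s u) (fun w => exists s', S s' /\ w = RApp s' u)
| rs_appr s u U : rstep u U -> rstep (RApp s u) (fun w => exists u', U u' /\ w = RApp s u')
| rs_bag b B : rbstep b B -> rstep (RBag b) (fun w => exists b', B b' /\ w = RBag b')
with rvstep : rval -> (rval -> Prop) -> Prop :=
| rvs_lam t T : rstep t T -> rvstep (RLam t) (fun w => exists t', T t' /\ w = RLam t')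
with rbstep : rbag -> (rbag -> Prop) -> Prop :=
| rbs_head v V b : rvstep v V -> rbstep (BCons v b) (fun w => exists v', V v' /\ w = BCons v' b)
| rbs_tail v b B : rbstep b B -> rbstep (BCons v b) (fun w => exists b', B b' /\ w = BCons v b').

(* Reduction on sets: e -> E1 and e notin E2 imply {e} u E2 -> E1 u E2
   (here E2 = A \ {e}). *)
Definition setstep (A B : rset) : Prop :=
  exists e E1, rstep e E1 /\ A e /\
    (forall x, B x <-> (E1 x \/ (A x /\ x <> e))).

Definition rnormal (e : rterm) : Prop := forall E, ~ rstep e E.
Definition set_normal (F : rset) : Prop := forall x, F x -> rnormal x.

(* F is the normal form nf(e) of e (unique up to req, since ->_r is
   confluent and strongly normalizing). *)
Definition is_nf (e : rterm) (F : rset) : Prop :=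
  clos_refl_trans rset setstep (eq e) F /\ set_normal F.

Fixpoint bag_all (P : rval -> Prop) (b : rbag) : Prop :=
  match b with BNil => True | BCons v b' => P v /\ bag_all P b' end.

Fixpoint taylor (M : lterm) : rset :=
  match M with
  | LVar x => fun t => exists b, t = RBag b /\ bag_all (fun v => v = RVar x) b
  | LLam N => fun t => exists b, t = RBag b /\
                 bag_all (fun v => exists u, v = RLam u /\ taylor N u) b
  | LApp P Q => fun t => exists s u, t = RApp s u /\ taylor P s /\ taylor Q u
  end.

Definition NFset (E : rset) : rset :=
  fun t => exists e F, E e /\ is_nf e F /\ F t.

Definition rset_eq (A B : rset) : Prop :=
  forall t, (exists t', A t' /\ req t t') <-> (exists t', B t' /\ req t t').

(* The resource calculus is strongly normalizing: beta_r decreases the size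
   of simple terms, sigma1 and sigma3 a polynomial interpretation. It is
   locally confluent, the critical pairs with beta_r being closed by the
   substitution lemma for linear substitution. Newman's lemma, for reduction
   of a term to a set of terms, then gives every simple term e a unique normal
   form nf(e), with NF(E) the union of the nf(e), e in E, and
   nf(C[e]) = U { nf(C[e']) | e' in nf(e) } for every context C.

   The Taylor expansion commutes with lifting and turns M{x:=V} into the
   linear substitutions t<x := vs>, t in T(M), vs a list of elements of the
   bags of T(V). So a root step beta_v, sigma1 or sigma3 from M to N is
   mirrored on T(M): each of its elements either reduces by beta_r, sigma1 or
   sigma3 into T(N), covering all of T(N), or has a bag of size other than 1
   in function position and normal form {} by rule (0). Hence
   NF(T(M)) = NF(T(N)), and compositionality propagates this through
   contexts. *)

From Stdlib Require Import List Permutation Relations Arith Lia Wellfounded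
  Classical ClassicalEpsilon FunctionalExtensionality PropExtensionality.
Import ListNotations.

Definition img {A B : Type} (f : A -> B) (P : A -> Prop) : B -> Prop :=
  fun y => exists x, P x /\ y = f x.

Definition finite {A : Type} (P : A -> Prop) : Prop := exists l, forall x, P x <-> In x l.

Lemma set_ext {A : Type} (P Q : A -> Prop) : (forall x, P x <-> Q x) -> P = Q.
Proof.
  intro H. apply functional_extensionality; intro x. apply propositional_extensionality, H.
Qed.

Lemma img_img {A B C : Type} (f : B -> C) (g : A -> B) (P : A -> Prop) :
  img f (img g P) = img (fun x => f (g x)) P.
Proof.
  apply set_ext; intro z; split.
  - intros [y [[x [Hx ->]] ->]]. exists x; auto.
  - intros [x [Hx ->]]. exists (g x); split; auto. exists x; auto.
Qed.

Lemma img_eq {A B : Type} (f : A -> B) (x : A) : img f (eq x) = eq (f x).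
Proof.
  apply set_ext; intro y; split.
  - now intros [? [<- ->]].
  - intros <-. exists x; auto.
Qed.

Lemma finite_incl {A : Type} (P Q : A -> Prop) : finite Q -> (forall x, P x -> Q x) -> finite P.
Proof.
  intros [l Hl] HPQ.
  exists (filter (fun x => if excluded_middle_informative (P x) then true else false) l).
  intro x. rewrite filter_In, <- Hl.
  destruct excluded_middle_informative; split; intuition; discriminate.
Qed.

Lemma finite_list {A : Type} (l : list A) : finite (fun x => In x l).
Proof. now exists l. Qed.

Lemma finite_eq {A : Type} (x : A) : finite (eq x).
Proof. exists [x]. simpl. intuition. Qed.

Lemma finite_img {A B : Type} (f : A -> B) (P : A -> Prop) : finite P -> finite (img f P).
Proof.
  intros [l Hl]. exists (map f l). intro y. rewrite in_map_iff. split.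
  - intros [x [Hx ->]]. exists x. split; auto. now apply Hl.
  - intros [x [<- Hx]]. exists x. split; auto. now apply Hl.
Qed.

Lemma finite_prod {A B C : Type} (f : A -> B -> C) P Q : finite P -> finite Q ->
  finite (fun z => exists x y, P x /\ Q y /\ z = f x y).
Proof.
  intros [l1 H1] [l2 H2]. exists (flat_map (fun x => map (f x) l2) l1). intro z.
  rewrite in_flat_map. split.
  - intros [x [y [Hx [Hy ->]]]]. exists x. split; [now apply H1 | apply in_map; now apply H2].
  - intros [x [Hx Hz]]. apply in_map_iff in Hz as [y [<- Hy]].
    exists x, y. rewrite H1, H2. auto.
Qed.

Lemma finite_union {I A : Type} (l : list I) (F : I -> A -> Prop) :
  (forall i, In i l -> finite (F i)) -> finite (fun x => exists i, In i l /\ F i x).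
Proof.
  induction l as [|i l IH]; intro H.
  - exists []. simpl. firstorder.
  - destruct (H i (or_introl eq_refl)) as [l1 H1], IH as [l2 H2]; [intros; apply H; now right|].
    exists (l1 ++ l2). intro x. rewrite in_app_iff, <- H1, <- H2. simpl. split.
    + intros [j [[<- | Hj] Hx]]; eauto.
    + intros [Hx | [j [Hj Hx]]]; eauto.
Qed.

Fixpoint splits {A : Type} (l : list A) : list (list A * list A) :=
  match l with
  | [] => [([], [])]
  | x :: l => flat_map (fun p => [(x :: fst p, snd p); (fst p, x :: snd p)]) (splits l)
  end.

Lemma splits_complete {A : Type} (l : list A) : forall l1 l2, Permutation l (l1 ++ l2) ->
  exists a b, In (a, b) (splits l) /\ Permutation a l1 /\ Permutation b l2.
Proof.
  induction l as [|x l IH]; intros l1 l2 P.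
  - apply Permutation_nil, app_eq_nil in P as [-> ->]. exists [], []. simpl; auto.
  - assert (Hx : In x (l1 ++ l2)) by (rewrite <- P; now left).
    apply in_app_or in Hx as [Hx | Hx]; apply in_split in Hx as [p [q ->]].
    + destruct (IH (p ++ q) l2) as [a [b [Hin [Pa Pb]]]].
      { rewrite <- app_assoc in P. apply Permutation_cons_app_inv in P.
        now rewrite app_assoc in P. }
      exists (x :: a), b. split; [apply in_flat_map; exists (a, b); simpl; auto|].
      split; auto. rewrite Pa. apply Permutation_middle.
    + destruct (IH l1 (p ++ q)) as [a [b [Hin [Pa Pb]]]].
      { rewrite app_assoc in P. apply Permutation_cons_app_inv in P.
        now rewrite <- app_assoc in P. }
      exists a, (x :: b). split; [apply in_flat_map; exists (a, b); simpl; auto|].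
      split; auto. rewrite Pb. apply Permutation_middle.
Qed.

Lemma perm_map_split {A B : Type} (f : A -> B) vs a b :
  Permutation (map f vs) (a ++ b) ->
  exists a0 b0, Permutation vs (a0 ++ b0) /\ a = map f a0 /\ b = map f b0.
Proof.
  intro H. apply Permutation_sym, Permutation_map_inv in H as [l [Hl Hp]].
  symmetry in Hl. apply map_eq_app in Hl as [a0 [b0 [-> [<- <-]]]].
  exists a0, b0. auto.
Qed.

Lemma app_cons_eq_inv {A : Type} (l1 l2 m1 m2 : list A) x y : l1 ++ x :: l2 = m1 ++ y :: m2 ->
  (l1 = m1 /\ x = y /\ l2 = m2) \/ (exists p, m1 = l1 ++ x :: p /\ l2 = p ++ y :: m2) \/
  (exists p, l1 = m1 ++ y :: p /\ m2 = p ++ x :: l2).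
Proof.
  revert m1. induction l1 as [|a l1 IH]; intros [|b m1] E; simpl in *; injection E as -> E; subst.
  - now left.
  - right; left. now exists m1.
  - right; right. now exists l1.
  - destruct (IH _ E) as [[-> [-> ->]] | [[p [-> ->]] | [p [-> ->]]]];
      [left | right; left | right; right]; eauto.
Qed.

Lemma app_cons_snoc {A : Type} (k l : list A) x : k ++ x :: l = (k ++ [x]) ++ l.
Proof. now rewrite <- app_assoc. Qed.

(** * Newman's lemma for reduction of elements to sets *)

Section SetRewriting.

Context {X : Type} (step : X -> (X -> Prop) -> Prop).

Definition normal (x : X) : Prop := forall E, ~ step x E.
Definition normal_set (F : X -> Prop) : Prop := forall x, F x -> normal x.

Definition reduces_into (R : X -> (X -> Prop) -> Prop) (A G : X -> Prop) : Prop :=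
  (forall y, A y -> exists Y, R y Y /\ forall t, Y t -> G t) /\
  (forall t, G t -> exists y Y, A y /\ R y Y /\ Y t).

(* [red x F]: F is what remains after reducing x, then (in parallel) the
   elements of the result, and so on, along a finite tree of steps. *)
Inductive red : X -> (X -> Prop) -> Prop :=
| red_refl x : red x (eq x)
| red_step x E F : step x E -> reduces_into red E F -> red x F.

Definition joinable (A B : X -> Prop) : Prop :=
  exists G, reduces_into red A G /\ reduces_into red B G.

Definition locally_confluent : Prop :=
  forall x E1 E2, step x E1 -> step x E2 -> joinable E1 E2.

Definition nf (x : X) : X -> Prop := fun t => exists F, red x F /\ normal_set F /\ F t.
Definition nfs (A : X -> Prop) : X -> Prop := fun t => exists x, A x /\ nf x t.

Definition unique_nf (x : X) : Prop :=
  forall F1 F2, red x F1 -> normal_set F1 -> red x F2 -> normal_set F2 ->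
  forall t, F1 t -> F2 t.

Definition reduct (y x : X) : Prop := exists E, step x E /\ E y.

(* Instantiated at [rstep], this is [setstep]. *)
Definition set_step (A B : X -> Prop) : Prop :=
  exists e E, step e E /\ A e /\ (forall x, B x <-> E x \/ (A x /\ x <> e)).

Lemma reduces_into_refl A : reduces_into red A A.
Proof.
  split.
  - intros y Hy. exists (eq y). split; [constructor | now intros t <-].
  - intros t Ht. exists t, (eq t). repeat split; auto. constructor.
Qed.

Lemma red_one x E : step x E -> red x E.
Proof. intro H. exact (red_step x E E H (reduces_into_refl E)). Qed.

Lemma red_step_eq x y F : step x (eq y) -> red y F -> red x F.
Proof.
  intros Hxy Hy. apply (red_step x (eq y)); auto. split.
  - intros ? <-. exists F; auto.
  - intros t Ht. exists y, F; auto.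
Qed.

Lemma reduces_into_single x F : red x F -> reduces_into red (eq x) F.
Proof.
  intro H. split.
  - intros ? <-. exists F; auto.
  - intros t Ht. exists x, F; auto.
Qed.

Lemma reduces_into_red A G : reduces_into step A G -> reduces_into red A G.
Proof.
  intros [H1 H2]. split.
  - intros y Hy. destruct (H1 y Hy) as [Y [HY HYG]]. exists Y; split; auto. now apply red_one.
  - intros t Ht. destruct (H2 t Ht) as [y [Y [Hy [HY HYt]]]]. exists y, Y.
    repeat split; auto. now apply red_one.
Qed.

Lemma nf_normal x : normal_set (nf x).
Proof. intros t [F [_ [HF Ht]]]. auto. Qed.

Lemma nf_of_normal x : normal x -> forall t, nf x t <-> t = x.
Proof.
  intros Hx t; split.
  - intros [F [HF [_ Ht]]]. inversion HF as [|y E G HE]; subst; auto.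
    now destruct (Hx E).
  - intros ->. exists (eq x). split; [constructor | split; auto]. now intros ? <-.
Qed.

Lemma nfs_normal_set F : normal_set F -> forall t, nfs F t <-> F t.
Proof.
  intros HF t; split.
  - intros [x [Hx Ht]]. apply nf_of_normal in Ht; [now subst | auto].
  - intro Ht. exists t; split; auto. apply nf_of_normal; auto.
Qed.

Lemma red_step_nfs x E :
  step x E -> (forall y, E y -> exists F, red y F /\ normal_set F) -> red x (nfs E).
Proof.
  intros HE Hwn. apply (red_step x E); auto. split.
  - intros y Hy. destruct (Hwn y Hy) as [F [HF HFn]]. exists F; split; auto.
    intros t Ht. exists y; split; auto. exists F; auto.
  - intros t [y [Hy [F [HF [_ Ht]]]]]. exists y, F; auto.
Qed.

Lemma nfs_reduces_into A G :
  (forall y Y, A y -> red y Y -> forall t, nf y t <-> nfs Y t) ->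
  reduces_into red A G -> forall t, nfs A t <-> nfs G t.
Proof.
  intros K [H1 H2] t; split.
  - intros [y [Hy Ht]]. destruct (H1 y Hy) as [Y [HY HYG]].
    apply (K y Y Hy HY) in Ht. destruct Ht as [w [Hw Ht]]. exists w; auto.
  - intros [w [Hw Ht]]. destruct (H2 w Hw) as [y [Y [Hy [HY HYw]]]].
    exists y; split; auto. apply (K y Y Hy HY). exists w; auto.
Qed.

Definition closed_ctx (C : X -> X) : Prop := forall x E, step x E -> step (C x) (img C E).

Lemma reduces_into_img_step (f g : X -> X) A :
  (forall x, A x -> step (f x) (eq (g x))) -> reduces_into red (img f A) (img g A).
Proof.
  intro H. apply reduces_into_red. split.
  - intros ? [x [Hx ->]]. exists (eq (g x)). split; auto. intros ? <-. exists x; auto.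
  - intros ? [x [Hx ->]]. exists (f x), (eq (g x)). repeat split; auto. exists x; auto.
Qed.

Lemma joinable_sym A B : joinable A B -> joinable B A.
Proof. intros [G [? ?]]. now exists G. Qed.

Lemma joinable_ctx_step C f x E : closed_ctx C -> step x E ->
  (forall y, E y -> step (f y) (eq (C y))) -> joinable (eq (C x)) (img f E).
Proof.
  intros HC HE Hf. exists (img C E). split.
  - apply reduces_into_single, red_one. now apply HC.
  - now apply reduces_into_img_step.
Qed.

Section StronglyNormalizing.

Hypothesis reduct_wf : well_founded reduct.

Lemma red_nf_exists x : exists F, red x F /\ normal_set F.
Proof.
  induction x as [x IH] using (well_founded_ind reduct_wf).
  destruct (classic (normal x)) as [Hx | Hx].
  - exists (eq x). split; [constructor | now intros ? <-].
  - apply not_all_ex_not in Hx as [E HE]. apply NNPP in HE.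
    exists (nfs E). split.
    + apply red_step_nfs; auto. intros y Hy. apply IH. exists E; auto.
    + intros t [y [_ Ht]]. eapply nf_normal; eauto.
Qed.

Lemma nf_step_of_unique x E : unique_nf x -> step x E -> forall t, nf x t <-> nfs E t.
Proof.
  intros Hu HE.
  assert (Hred : red x (nfs E)) by (apply red_step_nfs; auto; intros; apply red_nf_exists).
  assert (Hn : normal_set (nfs E)) by (intros t [y [_ Ht]]; eapply nf_normal; eauto).
  intro t; split.
  - intros [F [HF [HFn Ht]]]. eapply Hu; eauto.
  - intro Ht. exists (nfs E); auto.
Qed.

Lemma nf_red_of_unique y :
  (forall z, clos_refl_trans X reduct z y -> unique_nf z) ->
  forall Y, red y Y -> forall t, nf y t <-> nfs Y t.
Proof.
  induction y as [y IH] using (well_founded_ind reduct_wf). intros Hu Y HY.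
  destruct HY as [y | y E Y HE HEY].
  - intro t; split.
    + intro Ht. exists y; auto.
    + now intros [? [<- Ht]].
  - intro t. rewrite (nf_step_of_unique y E (Hu y (rt_refl _ _ _)) HE t).
    apply nfs_reduces_into; auto.
    intros z Z Hz HZ. assert (Hzy : reduct z y) by (exists E; auto).
    apply IH; auto. intros w Hw. apply Hu. eapply rt_trans; eauto. now apply rt_step.
Qed.

Lemma reduces_into_img (C : X -> X) A G :
  (forall y Y, A y -> red y Y -> red (C y) (img C Y)) ->
  reduces_into red A G -> reduces_into red (img C A) (img C G).
Proof.
  intros HC [H1 H2]. split.
  - intros ? [y [Hy ->]]. destruct (H1 y Hy) as [Y [HY HYG]].
    exists (img C Y). split; auto. intros ? [t [Ht ->]]. exists t; auto.
  - intros ? [t [Ht ->]]. destruct (H2 t Ht) as [y [Y [Hy [HY HYt]]]].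
    exists (C y), (img C Y). repeat split; auto; eexists; eauto.
Qed.

Lemma red_ctx C : closed_ctx C -> forall x F, red x F -> red (C x) (img C F).
Proof.
  intros HC x. induction x as [x IH] using (well_founded_ind reduct_wf). intros F HF.
  destruct HF as [x | x E F HE HEF].
  - rewrite img_eq. constructor.
  - apply (red_step _ (img C E)); auto. apply reduces_into_img; auto.
    intros y Y Hy. apply IH. exists E; auto.
Qed.

Lemma reduces_into_ctx C A G :
  closed_ctx C -> reduces_into red A G -> reduces_into red (img C A) (img C G).
Proof. intros HC H. apply reduces_into_img; auto. intros y Y _ HY. now apply red_ctx. Qed.

Theorem newman : locally_confluent -> forall x, unique_nf x.
Proof.
  intros LC x.
  induction x as [x IH] using (well_founded_ind (wf_clos_trans X reduct reduct_wf)).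
  assert (K : forall E, step x E -> forall y Y, E y -> red y Y ->
            forall t, nf y t <-> nfs Y t).
  { intros E HE y Y Hy. apply nf_red_of_unique. intros z Hz. apply IH.
    apply clos_rt_t with y; auto. apply t_step. exists E; auto. }
  assert (Hsplit : forall E F, step x E -> normal_set F -> reduces_into red E F ->
            forall t, F t <-> nfs E t).
  { intros E F HE HF HEF t. rewrite <- (nfs_normal_set F HF t).
    symmetry. exact (nfs_reduces_into E F (K E HE) HEF t). }
  intros F1 F2 HF1 HN1 HF2 HN2 t Ht.
  destruct HF1 as [x | x E1 F1 HE1 J1]; destruct HF2 as [x | x E2 F2 HE2 J2]; auto.
  - exfalso. exact (HN1 x eq_refl E2 HE2).
  - exfalso. exact (HN2 x eq_refl E1 HE1).
  - destruct (LC x E1 E2 HE1 HE2) as [G [G1 G2]].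
    apply (Hsplit E2 F2 HE2 HN2 J2), (nfs_reduces_into E2 G (K E2 HE2) G2),
      (nfs_reduces_into E1 G (K E1 HE1) G1), (Hsplit E1 F1 HE1 HN1 J1), Ht.
Qed.

Section Confluent.

Hypothesis confluent : locally_confluent.

Lemma nf_red x F : red x F -> forall t, nf x t <-> nfs F t.
Proof. apply nf_red_of_unique. intros; now apply newman. Qed.

Lemma nf_step x E : step x E -> forall t, nf x t <-> nfs E t.
Proof. apply nf_step_of_unique. now apply newman. Qed.

Lemma nf_step_eq x y : step x (eq y) -> forall t, nf x t <-> nf y t.
Proof.
  intros H t. rewrite (nf_step x _ H t). split.
  - now intros [? [<- ?]].
  - intro Ht. exists y; auto.
Qed.

Lemma nf_red_normal x F : red x F -> normal_set F -> forall t, F t <-> nf x t.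
Proof. intros HF HN t. rewrite (nf_red x F HF t). symmetry. now apply nfs_normal_set. Qed.

Lemma nf_ctx C x : closed_ctx C -> forall t, nf (C x) t <-> exists x', nf x x' /\ nf (C x') t.
Proof.
  intros HC t. destruct (red_nf_exists x) as [F [HF HN]].
  rewrite (nf_red _ _ (red_ctx C HC x F HF) t). split.
  - intros [? [[x' [Hx' ->]] Ht]]. exists x'. split; auto. now apply nf_red_normal with F.
  - intros [x' [Hx' Ht]]. exists (C x'). split; auto. exists x'. split; auto.
    now apply (nf_red_normal x F).
Qed.

Lemma nfs_set_step A B : set_step A B -> forall t, nfs A t <-> nfs B t.
Proof.
  intros [e [E [HE [Ae HB]]]] t. split.
  - intros [x [Ax Hx]]. destruct (classic (x = e)) as [-> | Hne].
    + apply (nf_step _ _ HE) in Hx as [y [Hy Ht]]. exists y. split; auto. apply HB; auto.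
    + exists x. split; auto. apply HB; auto.
  - intros [y [By Ht]]. apply HB in By as [Ey | [Ay _]].
    + exists e. split; auto. apply (nf_step _ _ HE). exists y; auto.
    + exists y; auto.
Qed.

Lemma nf_set_reduction e F :
  clos_refl_trans _ set_step (eq e) F -> normal_set F -> forall t, F t <-> nf e t.
Proof.
  intros HR HN t.
  assert (Hinv : forall A B, clos_refl_trans _ set_step A B -> forall t, nfs A t <-> nfs B t).
  { induction 1 as [A B H | A | A B C _ IH1 _ IH2]; intro u.
    - now apply nfs_set_step.
    - reflexivity.
    - now rewrite IH1. }
  rewrite <- (nfs_normal_set F HN t), <- (Hinv _ _ HR t). split.
  - now intros [? [<- ?]].
  - intro Ht. exists e; auto.
Qed.

End Confluent.

Section FinitelyBranching.

Hypothesis step_finite : forall x E, step x E -> finite E.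

(* [weight x n]: n is the size of some reduction tree of x. Reducing an element
   of a set along its tree lowers the total weight of a weighted list covering
   the set, which makes [set_step] terminate. *)
Inductive weight : X -> nat -> Prop :=
| weight_normal x : normal x -> weight x 1
| weight_step x E L : step x E -> (forall y, E y -> In y (map fst L)) ->
    Forall (fun p => weight (fst p) (snd p)) L -> weight x (S (list_sum (map snd L))).

Lemma weight_exists x : exists n, weight x n.
Proof.
  induction x as [x IH] using (well_founded_ind reduct_wf).
  destruct (classic (normal x)) as [Hx | Hx].
  - exists 1. now constructor.
  - apply not_all_ex_not in Hx as [E HE]. apply NNPP in HE.
    destruct (step_finite x E HE) as [l Hl].
    assert (HL : exists L, map fst L = l /\ Forall (fun p => weight (fst p) (snd p)) L).
    { assert (Hw : forall y, In y l -> exists n, weight y n).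
      { intros y Hy. apply IH. exists E. split; auto. now apply Hl. }
      clear Hl. induction l as [|y l IHl].
      - exists []; auto.
      - destruct (Hw y (or_introl eq_refl)) as [n Hn].
        destruct IHl as [L [HL1 HL2]]; [intros; apply Hw; now right|].
        exists ((y, n) :: L). simpl. split; [congruence | now constructor]. }
    destruct HL as [L [<- HL]]. eexists. apply (weight_step x E L); auto.
    intros y Hy. now apply Hl.
Qed.

Lemma set_reduction_exists_list (L : list (X * nat)) (A : X -> Prop) :
  Forall (fun p => weight (fst p) (snd p)) L -> (forall x, A x -> In x (map fst L)) ->
  exists B, clos_refl_trans _ set_step A B /\ normal_set B.
Proof.
  remember (list_sum (map snd L)) as n eqn:Hn. revert L A Hn.
  induction n as [n IH] using lt_wf_ind. intros L A Hn HL HA.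
  destruct (classic (normal_set A)) as [HN | HN]; [exists A; split; auto using rt_refl|].
  apply not_all_ex_not in HN as [x HN]. apply imply_to_and in HN as [Ax Hx].
  destruct (in_map_iff fst L x) as [[[y m] [Hy Hin]] _]; [now apply HA|]. simpl in Hy. subst y.
  apply in_split in Hin as [L1 [L2 ->]].
  apply Forall_app in HL as [HL1 HL2]. inversion HL2 as [|? ? Hxm HL2']; subst.
  inversion Hxm as [? Hnorm | ? E L0 HE HEL0 HL0]; subst; [contradiction|].
  set (A' := fun y => E y \/ (A y /\ y <> x)).
  assert (HA' : forall y, A' y -> In y (map fst (L0 ++ L1 ++ L2))).
  { intros y [Ey | [Ay Hyx]]; rewrite !map_app, !in_app_iff; auto.
    apply HA in Ay. rewrite map_app, in_app_iff in Ay. simpl in Ay. intuition congruence. }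
  destruct (IH (list_sum (map snd (L0 ++ L1 ++ L2)))) with (L0 ++ L1 ++ L2) A' as [B [HB HBn]];
    rewrite ?Forall_app; auto.
  { rewrite !map_app, !list_sum_app in *. simpl in *. lia. }
  exists B. split; auto. apply rt_trans with A'; auto. apply rt_step.
  exists x, E. repeat split; auto.
Qed.

Lemma set_reduction_exists e : exists F, clos_refl_trans _ set_step (eq e) F /\ normal_set F.
Proof.
  destruct (weight_exists e) as [n Hn].
  apply (set_reduction_exists_list [(e, n)]); auto. now intros ? <-; left.
Qed.

End FinitelyBranching.

End StronglyNormalizing.

End SetRewriting.

(** * Lifting and linear substitution *)

Notation sbag v := (RBag (sing v)).

Scheme rterm_ind' := Induction for rterm Sort Prop
  with rval_ind' := Induction for rval Sort Prop
  with rbag_ind' := Induction for rbag Sort Prop.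
Combined Scheme syntax_ind from rterm_ind', rval_ind', rbag_ind'.

Scheme lsub_ind' := Induction for lsub Sort Prop
  with lsubv_ind' := Induction for lsubv Sort Prop
  with lsubb_ind' := Induction for lsubb Sort Prop.
Combined Scheme lsub_mut_ind from lsub_ind', lsubv_ind', lsubb_ind'.

Ltac leb_cases := repeat match goal with
  | |- context [?a <=? ?b] => destruct (Nat.leb_spec a b)
  | H : context [?a <=? ?b] |- _ => destruct (Nat.leb_spec a b)
  end.

Lemma lift_lift_merge :
  (forall t j k c c', c <= c' -> c' <= c + k -> rlift j c' (rlift k c t) = rlift (j + k) c t) /\
  (forall v j k c c', c <= c' -> c' <= c + k -> vlift j c' (vlift k c v) = vlift (j + k) c v) /\
  (forall b j k c c', c <= c' -> c' <= c + k -> blift j c' (blift k c b) = blift (j + k) c b).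
Proof.
  apply syntax_ind; intros; simpl; try (rewrite H by lia); try (rewrite H0 by lia); auto.
  leb_cases; simpl; leb_cases; f_equal; lia.
Qed.

Lemma lift_lift_comm :
  (forall t j k c c', c' <= c -> rlift j c' (rlift k c t) = rlift k (c + j) (rlift j c' t)) /\
  (forall v j k c c', c' <= c -> vlift j c' (vlift k c v) = vlift k (c + j) (vlift j c' v)) /\
  (forall b j k c c', c' <= c -> blift j c' (blift k c b) = blift k (c + j) (blift j c' b)).
Proof.
  apply syntax_ind; intros; simpl; try (rewrite H by lia); try (rewrite H0 by lia); auto.
  leb_cases; simpl; leb_cases; f_equal; lia.
Qed.

Lemma lsub_perm_all :
  (forall d t vs u, lsub d t vs u -> forall vs', Permutation vs vs' -> lsub d t vs' u) /\
  (forall d v vs u, lsubv d v vs u -> forall vs', Permutation vs vs' -> lsubv d v vs' u) /\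
  (forall d b vs u, lsubb d b vs u -> forall vs', Permutation vs vs' -> lsubb d b vs' u).
Proof.
  apply lsub_mut_ind; intros d; intros.
  - eapply ls_app; eauto. eapply perm_trans; [apply Permutation_sym|]; eauto.
  - constructor; auto.
  - apply Permutation_length_1_inv in H. subst. constructor.
  - apply Permutation_nil in H. subst. now constructor.
  - apply Permutation_nil in H. subst. now constructor.
  - constructor; auto.
  - apply Permutation_nil in H. subst. constructor.
  - eapply lsb_cons; eauto. eapply perm_trans; [apply Permutation_sym|]; eauto.
Qed.

Lemma lsub_perm d t vs vs' u : lsub d t vs u -> Permutation vs vs' -> lsub d t vs' u.
Proof. intros; eapply lsub_perm_all; eauto. Qed.
Lemma lsubv_perm d v vs vs' u : lsubv d v vs u -> Permutation vs vs' -> lsubv d v vs' u.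
Proof. intros; eapply lsub_perm_all; eauto. Qed.
Lemma lsubb_perm d b vs vs' u : lsubb d b vs u -> Permutation vs vs' -> lsubb d b vs' u.
Proof. intros; eapply lsub_perm_all; eauto. Qed.

Lemma lsub_app d s vs1 s' u vs2 u' vs :
  lsub d s vs1 s' -> lsub d u vs2 u' -> Permutation vs (vs1 ++ vs2) ->
  lsub d (RApp s u) vs (RApp s' u').
Proof. intros; eapply ls_app; eauto. Qed.

Lemma lsubb_cons d v vs1 v' b vs2 b' vs :
  lsubv d v vs1 v' -> lsubb d b vs2 b' -> Permutation vs (vs1 ++ vs2) ->
  lsubb d (BCons v b) vs (BCons v' b').
Proof. intros; eapply lsb_cons; eauto. Qed.

Lemma lsub_sing d v vs v' : lsubv d v vs v' -> lsub d (sbag v) vs (sbag v').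
Proof.
  intro H. constructor. apply lsb_cons with vs []; [now rewrite app_nil_r | auto | constructor].
Qed.

Lemma lsubb_length d b vs b' : lsubb d b vs b' -> length (bag_list b') = length (bag_list b).
Proof. induction 1; simpl; auto. Qed.

(* [rlift 1 d t] does not contain the variable [d]. *)
Lemma lsub_unused_inv :
  (forall t d vs w, lsub d (rlift 1 d t) vs w -> vs = [] /\ w = t) /\
  (forall v d vs w, lsubv d (vlift 1 d v) vs w -> vs = [] /\ w = v) /\
  (forall b d vs w, lsubb d (blift 1 d b) vs w -> vs = [] /\ w = b).
Proof.
  apply syntax_ind; intros; simpl in *.
  - inversion H1; subst.
    destruct (H _ _ _ ltac:(eassumption)), (H0 _ _ _ ltac:(eassumption)); subst.
    split; auto. now apply Permutation_nil.
  - inversion H0; subst. destruct (H _ _ _ ltac:(eassumption)); now subst.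
  - leb_cases; inversion H; subst; try lia; split; auto; f_equal; lia.
  - inversion H0; subst. destruct (H _ _ _ ltac:(eassumption)); now subst.
  - now inversion H.
  - inversion H1; subst.
    destruct (H _ _ _ ltac:(eassumption)), (H0 _ _ _ ltac:(eassumption)); subst.
    split; auto. now apply Permutation_nil.
Qed.

Lemma lsub_unused :
  (forall t d, lsub d (rlift 1 d t) [] t) /\
  (forall v d, lsubv d (vlift 1 d v) [] v) /\
  (forall b d, lsubb d (blift 1 d b) [] b).
Proof.
  apply syntax_ind; intros; simpl.
  - now apply ls_app with [] [].
  - now constructor.
  - leb_cases.
    + replace n with (pred (n + 1)) at 2 by lia. apply lsv_gt; lia.
    + apply lsv_lt; lia.
  - now constructor.
  - constructor.
  - now apply lsb_cons with [] [].
Qed.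

Lemma lsub_lift_below :
  (forall d t vs u, lsub d t vs u -> forall k c, c <= d ->
     lsub (d + k) (rlift k c t) vs (rlift k c u)) /\
  (forall d v vs u, lsubv d v vs u -> forall k c, c <= d ->
     lsubv (d + k) (vlift k c v) vs (vlift k c u)) /\
  (forall d b vs u, lsubb d b vs u -> forall k c, c <= d ->
     lsubb (d + k) (blift k c b) vs (blift k c u)).
Proof.
  apply lsub_mut_ind; intros; simpl; try (econstructor; eauto; fail).
  - leb_cases; try lia. rewrite (proj1 (proj2 lift_lift_merge)) by lia.
    rewrite Nat.add_comm. constructor.
  - leb_cases; constructor; lia.
  - leb_cases; try lia. replace (pred m + k) with (pred (m + k)) by lia. constructor; lia.
  - constructor. apply (H k (S c)). lia.
Qed.

Lemma lsub_lift_below_inv :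
  (forall t d vs w k c, c <= d -> lsub (d + k) (rlift k c t) vs w ->
     exists u, lsub d t vs u /\ w = rlift k c u) /\
  (forall v d vs w k c, c <= d -> lsubv (d + k) (vlift k c v) vs w ->
     exists u, lsubv d v vs u /\ w = vlift k c u) /\
  (forall b d vs w k c, c <= d -> lsubb (d + k) (blift k c b) vs w ->
     exists u, lsubb d b vs u /\ w = blift k c u).
Proof.
  apply syntax_ind; intros; simpl in *.
  - inversion H2; subst.
    destruct (H _ _ _ _ _ H1 ltac:(eassumption)) as [s1 [? ->]].
    destruct (H0 _ _ _ _ _ H1 ltac:(eassumption)) as [s2 [? ->]].
    exists (RApp s1 s2). split; auto. eapply ls_app; eauto.
  - inversion H1; subst. destruct (H _ _ _ _ _ H0 ltac:(eassumption)) as [b1 [? ->]].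
    exists (RBag b1). split; auto. now constructor.
  - leb_cases; inversion H0; subst; try lia.
    + replace n with d by lia. exists (vlift d 0 v). split; [constructor|].
      rewrite (proj1 (proj2 lift_lift_merge)) by lia. f_equal; lia.
    + exists (RVar n). split; [constructor; lia | simpl; leb_cases; auto; lia].
    + exists (RVar (pred n)). split; [constructor; lia | simpl; leb_cases; f_equal; lia].
    + exists (RVar n). split; [constructor; lia | simpl; leb_cases; auto; lia].
  - inversion H1; subst. destruct (H (S d) vs t' k (S c)) as [u [? ->]]; auto; [lia|].
    exists (RLam u). split; auto. now constructor.
  - inversion H0; subst. exists BNil. split; auto. constructor.
  - inversion H2; subst.
    destruct (H _ _ _ _ _ H1 ltac:(eassumption)) as [s1 [? ->]].
    destruct (H0 _ _ _ _ _ H1 ltac:(eassumption)) as [s2 [? ->]].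
    exists (BCons s1 s2). split; auto. eapply lsb_cons; eauto.
Qed.

Lemma lsub_lift1 d t vs u : lsub d t vs u -> lsub (S d) (rlift 1 0 t) vs (rlift 1 0 u).
Proof. intro H. rewrite <- Nat.add_1_r. apply lsub_lift_below; auto; lia. Qed.
Lemma lsubv_lift1 d v vs u : lsubv d v vs u -> lsubv (S d) (vlift 1 0 v) vs (vlift 1 0 u).
Proof. intro H. rewrite <- Nat.add_1_r. apply lsub_lift_below; auto; lia. Qed.

Lemma lsub_lift1_inv d t vs w :
  lsub (S d) (rlift 1 0 t) vs w -> exists u, lsub d t vs u /\ w = rlift 1 0 u.
Proof. rewrite <- Nat.add_1_r. intro H. eapply lsub_lift_below_inv in H; eauto. lia. Qed.
Lemma lsubv_lift1_inv d v vs w :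
  lsubv (S d) (vlift 1 0 v) vs w -> exists u, lsubv d v vs u /\ w = vlift 1 0 u.
Proof. rewrite <- Nat.add_1_r. intro H. eapply lsub_lift_below_inv in H; eauto. lia. Qed.

Lemma lsub_lift_above :
  (forall d t vs u, lsub d t vs u -> forall k c, d <= c ->
     lsub d (rlift k (S c) t) (map (vlift k (c - d)) vs) (rlift k c u)) /\
  (forall d v vs u, lsubv d v vs u -> forall k c, d <= c ->
     lsubv d (vlift k (S c) v) (map (vlift k (c - d)) vs) (vlift k c u)) /\
  (forall d b vs u, lsubb d b vs u -> forall k c, d <= c ->
     lsubb d (blift k (S c) b) (map (vlift k (c - d)) vs) (blift k c u)).
Proof.
  apply lsub_mut_ind; intros; cbn [rlift vlift blift map].
  - eapply ls_app; eauto. rewrite <- map_app. now apply Permutation_map.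
  - constructor; auto.
  - leb_cases; try lia.
    replace (vlift k c (vlift d 0 v)) with (vlift d 0 (vlift k (c - d) v)); [constructor|].
    rewrite (proj1 (proj2 lift_lift_comm)) by lia. f_equal. lia.
  - leb_cases; try lia. constructor; lia.
  - leb_cases; try lia.
    + replace (pred m + k) with (pred (m + k)) by lia. constructor; lia.
    + constructor; lia.
  - constructor. apply (H k (S c)). lia.
  - constructor.
  - eapply lsb_cons; eauto. rewrite <- map_app. now apply Permutation_map.
Qed.

Lemma lsub_lift_above_inv :
  (forall t d vs w k c, d <= c -> lsub d (rlift k (S c) t) (map (vlift k (c - d)) vs) w ->
     exists u, lsub d t vs u /\ w = rlift k c u) /\
  (forall v d vs w k c, d <= c -> lsubv d (vlift k (S c) v) (map (vlift k (c - d)) vs) w ->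
     exists u, lsubv d v vs u /\ w = vlift k c u) /\
  (forall b d vs w k c, d <= c -> lsubb d (blift k (S c) b) (map (vlift k (c - d)) vs) w ->
     exists u, lsubb d b vs u /\ w = blift k c u).
Proof.
  apply syntax_ind; intros; cbn [rlift vlift blift map] in *.
  - inversion H2; subst.
    match goal with P : Permutation (map _ _) _ |- _ =>
      apply perm_map_split in P as [a0 [b0 [? [-> ->]]]] end.
    destruct (H _ _ _ _ _ H1 ltac:(eassumption)) as [s1 [? ->]].
    destruct (H0 _ _ _ _ _ H1 ltac:(eassumption)) as [s2 [? ->]].
    exists (RApp s1 s2). split; auto. eapply ls_app; eauto.
  - inversion H1; subst. destruct (H _ _ _ _ _ H0 ltac:(eassumption)) as [b1 [? ->]].
    exists (RBag b1). split; auto. now constructor.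
  - destruct (Nat.leb_spec (S c) n); inversion H0; subst; try lia;
      destruct vs as [|a [|]]; try discriminate.
    + exists (RVar (pred n)). split; [constructor; lia | simpl; leb_cases; f_equal; lia].
    + simpl in *. match goal with E : [_] = [_] |- _ => injection E as -> end.
      eexists. split; [constructor|].
      rewrite (proj1 (proj2 lift_lift_comm)) by lia. f_equal. lia.
    + exists (RVar n). split; [constructor; lia | simpl; leb_cases; auto; lia].
    + exists (RVar (pred n)). split; [constructor; lia | simpl; leb_cases; auto; lia].
  - inversion H1; subst. destruct (H (S d) vs t' k (S c)) as [u [? ->]]; auto; [lia|].
    exists (RLam u). split; auto. now constructor.
  - inversion H0; subst. destruct vs; [|discriminate]. exists BNil. split; auto.
  - inversion H2; subst.
    match goal with P : Permutation (map _ _) _ |- _ =>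
      apply perm_map_split in P as [a0 [b0 [? [-> ->]]]] end.
    destruct (H _ _ _ _ _ H1 ltac:(eassumption)) as [s1 [? ->]].
    destruct (H0 _ _ _ _ _ H1 ltac:(eassumption)) as [s2 [? ->]].
    exists (BCons s1 s2). split; auto. eapply lsb_cons; eauto.
Qed.

Definition count (l : list rval) (x : rval) : nat :=
  count_occ (fun a b => excluded_middle_informative (a = b)) l x.

Lemma count_app l1 l2 x : count (l1 ++ l2) x = count l1 x + count l2 x.
Proof. apply count_occ_app. Qed.
Lemma count_cons a l x :
  count (a :: l) x = (if excluded_middle_informative (a = x) then 1 else 0) + count l x.
Proof. unfold count. simpl. now destruct excluded_middle_informative. Qed.
Lemma count_nil x : count [] x = 0.
Proof. reflexivity. Qed.
Lemma Permutation_count l1 l2 : Permutation l1 l2 <-> forall x, count l1 x = count l2 x.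
Proof. apply Permutation_count_occ. Qed.
Global Opaque count.

Ltac perm_solve :=
  apply Permutation_count; let x := fresh "x" in intro x;
  repeat match goal with H : @Permutation rval ?a ?b |- _ =>
    pose proof (proj1 (Permutation_count a b) H x); clear H end;
  repeat rewrite ?count_app, ?count_cons, ?count_nil in *; lia.

(* [lsubl d cs vs cs']: the multiset [cs'] is obtained from [cs] by replacing
   the occurrences of [d] in its elements bijectively by [vs]; each triple of
   [L] is an element of [cs], the values substituted into it, and its image. *)
Definition src (p : rval * list rval * rval) : rval := fst (fst p).
Definition args (p : rval * list rval * rval) : list rval := snd (fst p).
Definition tgt (p : rval * list rval * rval) : rval := snd p.

Definition lsubl d (cs vs cs' : list rval) : Prop :=
  exists L, Permutation cs (map src L) /\ Permutation cs' (map tgt L) /\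
    Permutation vs (flat_map args L) /\ Forall (fun p => lsubv d (src p) (args p) (tgt p)) L.

Lemma lsubl_nil d : lsubl d [] [] [].
Proof. exists []. repeat split; auto. Qed.

Lemma lsubl_one d c vs c' : lsubv d c vs c' -> lsubl d [c] vs [c'].
Proof. intro H. exists [(c, vs, c')]. simpl. rewrite app_nil_r. repeat split; auto. Qed.

Lemma lsubl_app d cs1 vs1 cs1' cs2 vs2 cs2' :
  lsubl d cs1 vs1 cs1' -> lsubl d cs2 vs2 cs2' -> lsubl d (cs1 ++ cs2) (vs1 ++ vs2) (cs1' ++ cs2').
Proof.
  intros [L1 [? [? [? ?]]]] [L2 [? [? [? ?]]]]. exists (L1 ++ L2).
  rewrite !map_app, flat_map_app, Forall_app. repeat split; auto using Permutation_app.
Qed.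

Lemma lsubl_perm d cs vs cs' ds ws ds' :
  Permutation cs ds -> Permutation vs ws -> Permutation cs' ds' ->
  lsubl d cs vs cs' -> lsubl d ds ws ds'.
Proof.
  intros P1 P2 P3 [L HL]. exists L. now rewrite <- P1, <- P2, <- P3.
Qed.

Lemma lsubl_sub d L L1 L2 :
  Forall (fun p => lsubv d (src p) (args p) (tgt p)) L -> Permutation L (L1 ++ L2) ->
  lsubl d (map src L1) (flat_map args L1) (map tgt L1) /\
  lsubl d (map src L2) (flat_map args L2) (map tgt L2).
Proof.
  intros HL P. apply (Permutation_Forall P), Forall_app in HL as [? ?].
  split; eexists; repeat split; eauto.
Qed.

Lemma lsubl_split_r d cs vs cs' cs1' cs2' :
  lsubl d cs vs cs' -> Permutation cs' (cs1' ++ cs2') ->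
  exists cs1 cs2 vs1 vs2, Permutation cs (cs1 ++ cs2) /\ Permutation vs (vs1 ++ vs2) /\
    lsubl d cs1 vs1 cs1' /\ lsubl d cs2 vs2 cs2'.
Proof.
  intros [L [Pc [Pc' [Pv HL]]]] P.
  destruct (perm_map_split tgt L cs1' cs2') as [L1 [L2 [PL [-> ->]]]].
  { rewrite <- P. now symmetry. }
  destruct (lsubl_sub d L L1 L2 HL PL).
  exists (map src L1), (map src L2), (flat_map args L1), (flat_map args L2).
  rewrite <- map_app, <- flat_map_app. repeat split; auto.
  - rewrite Pc. now apply Permutation_map.
  - rewrite Pv. now apply Permutation_flat_map.
Qed.

Lemma lsubl_split_l d cs vs cs' cs1 cs2 :
  lsubl d cs vs cs' -> Permutation cs (cs1 ++ cs2) ->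
  exists cs1' cs2' vs1 vs2, Permutation cs' (cs1' ++ cs2') /\ Permutation vs (vs1 ++ vs2) /\
    lsubl d cs1 vs1 cs1' /\ lsubl d cs2 vs2 cs2'.
Proof.
  intros [L [Pc [Pc' [Pv HL]]]] P.
  destruct (perm_map_split src L cs1 cs2) as [L1 [L2 [PL [-> ->]]]].
  { rewrite <- P. now symmetry. }
  destruct (lsubl_sub d L L1 L2 HL PL).
  exists (map tgt L1), (map tgt L2), (flat_map args L1), (flat_map args L2).
  rewrite <- map_app, <- flat_map_app. repeat split; auto.
  - rewrite Pc'. now apply Permutation_map.
  - rewrite Pv. now apply Permutation_flat_map.
Qed.

Lemma lsubl_nil_r d cs vs : lsubl d cs vs [] -> cs = [] /\ vs = [].
Proof.
  intros [L [Pc [Pc' [Pv _]]]]. apply Permutation_nil in Pc'.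
  apply map_eq_nil in Pc' as ->. simpl in *. split; now apply Permutation_nil.
Qed.

Lemma lsubl_nil_l d vs cs' : lsubl d [] vs cs' -> cs' = [] /\ vs = [].
Proof.
  intros [L [Pc [Pc' [Pv _]]]]. apply Permutation_nil in Pc.
  apply map_eq_nil in Pc as ->. simpl in *. split; now apply Permutation_nil.
Qed.

Lemma lsubl_one_r d cs vs c' : lsubl d cs vs [c'] -> exists c, cs = [c] /\ lsubv d c vs c'.
Proof.
  intros [L [Pc [Pc' [Pv HL]]]]. apply Permutation_length_1_inv in Pc'.
  destruct L as [|p [|]]; try discriminate. injection Pc' as <-. inversion HL; subst.
  apply Permutation_sym, Permutation_length_1_inv in Pc as ->.
  simpl in Pv. rewrite app_nil_r in Pv.
  exists (src p). split; auto. eapply lsubv_perm; eauto. now apply Permutation_sym.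
Qed.

Lemma lsubl_one_l d c vs cs' : lsubl d [c] vs cs' -> exists c', cs' = [c'] /\ lsubv d c vs c'.
Proof.
  intros [L [Pc [Pc' [Pv HL]]]]. apply Permutation_length_1_inv in Pc.
  destruct L as [|p [|]]; try discriminate. injection Pc as <-. inversion HL; subst.
  apply Permutation_sym, Permutation_length_1_inv in Pc' as ->.
  simpl in Pv. rewrite app_nil_r in Pv.
  exists (tgt p). split; auto. eapply lsubv_perm; eauto. now apply Permutation_sym.
Qed.

Lemma lsubb_lsubl d b vs b' : lsubb d b vs b' -> lsubl d (bag_list b) vs (bag_list b').
Proof.
  induction 1; simpl. { apply lsubl_nil. }
  apply (lsubl_perm d ([v] ++ bag_list b) (vs1 ++ vs2) ([v'] ++ bag_list b')); auto.
  - now apply Permutation_sym.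
  - apply lsubl_app; auto. now apply lsubl_one.
Qed.

Lemma lsubl_lsubb d c : forall vs cs', lsubl d (bag_list c) vs cs' ->
  exists c', lsubb d c vs c' /\ Permutation (bag_list c') cs'.
Proof.
  induction c as [|v c IH]; simpl; intros vs cs' H.
  - apply lsubl_nil_l in H as [-> ->]. exists BNil. split; auto. constructor.
  - apply (lsubl_split_l _ _ _ _ [v] (bag_list c)) in H
      as [q1 [q2 [v1 [v2 [P1 [P2 [H1 H2]]]]]]]; auto.
    apply lsubl_one_l in H1 as [v' [-> Hv]]. apply IH in H2 as [c' [Hc Pc]].
    exists (BCons v' c'). split; [eapply lsb_cons; eauto|]. simpl. now rewrite P1, Pc.
Qed.

Lemma vlift_split x e d : vlift (e + S d) 0 x = vlift 1 e (vlift (e + d) 0 x).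
Proof. rewrite (proj1 (proj2 lift_lift_merge)) by lia. f_equal. lia. Qed.

Lemma lsubv_var_commute n e d vs1 r' cs vs2 cs' w :
  lsubv (e + S d) (RVar n) vs1 r' -> lsubl d cs vs2 cs' -> lsubv e r' cs' w ->
  exists m, lsubv e (RVar n) cs m /\ lsubv (e + d) m (vs1 ++ vs2) w.
Proof.
  intros H HL Hw. inversion H; subst.
  - rewrite vlift_split in Hw. apply (proj1 (proj2 lsub_unused_inv)) in Hw as [-> ->].
    apply lsubl_nil_r in HL as [-> ->]. exists (RVar (e + d)). split; [|constructor].
    replace (RVar (e + d)) with (RVar (pred (e + S d))) by (f_equal; lia). apply lsv_gt. lia.
  - inversion Hw; subst.
    + apply lsubl_one_r in HL as [c [-> Hc]]. exists (vlift n 0 c). split; [constructor|].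
      rewrite Nat.add_comm. apply (proj1 (proj2 lsub_lift_below)); auto. lia.
    + apply lsubl_nil_r in HL as [-> ->]. exists (RVar n). split; constructor; lia.
    + apply lsubl_nil_r in HL as [-> ->]. exists (RVar (pred n)). split; constructor; lia.
  - inversion Hw; subst; try lia.
    apply lsubl_nil_r in HL as [-> ->]. exists (RVar (pred n)). split; constructor; lia.
Qed.

(* The substitution lemma t<y:=us><x:=cs<y:=vs>> = t<x:=cs><y:=us++vs>, where
   in t the bound variable x is [e] and y is [e + S d]; y is [d] in the [cs]
   and [e + d] once x has been substituted. *)
Lemma lsub_commute :
  (forall r e d vs1 r', lsub (e + S d) r vs1 r' -> forall cs vs2 cs', lsubl d cs vs2 cs' ->
     forall w, lsub e r' cs' w -> exists m, lsub e r cs m /\ lsub (e + d) m (vs1 ++ vs2) w) /\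
  (forall r e d vs1 r', lsubv (e + S d) r vs1 r' -> forall cs vs2 cs', lsubl d cs vs2 cs' ->
     forall w, lsubv e r' cs' w -> exists m, lsubv e r cs m /\ lsubv (e + d) m (vs1 ++ vs2) w) /\
  (forall r e d vs1 r', lsubb (e + S d) r vs1 r' -> forall cs vs2 cs', lsubl d cs vs2 cs' ->
     forall w, lsubb e r' cs' w -> exists m, lsubb e r cs m /\ lsubb (e + d) m (vs1 ++ vs2) w).
Proof.
  apply syntax_ind.
  - intros a IHa b IHb e d vs1 r' H cs vs2 cs' HL w Hw.
    inversion H; subst. inversion Hw; subst.
    destruct (lsubl_split_r _ _ _ _ _ _ HL ltac:(eassumption))
      as [p1 [p2 [y1 [y2 [P1 [P2 [L1 L2]]]]]]].
    destruct (IHa _ _ _ _ ltac:(eassumption) _ _ _ L1 _ ltac:(eassumption)) as [ma [Ma1 Ma2]].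
    destruct (IHb _ _ _ _ ltac:(eassumption) _ _ _ L2 _ ltac:(eassumption)) as [mb [Mb1 Mb2]].
    exists (RApp ma mb).
    split; [eapply ls_app; eauto | eapply lsub_app; [exact Ma2 | exact Mb2 | perm_solve]].
  - intros b IHb e d vs1 r' H cs vs2 cs' HL w Hw.
    inversion H; subst. inversion Hw; subst.
    destruct (IHb _ _ _ _ ltac:(eassumption) _ _ _ HL _ ltac:(eassumption)) as [mb [Mb1 Mb2]].
    exists (RBag mb). split; now constructor.
  - intros. eapply lsubv_var_commute; eauto.
  - intros t IHt e d vs1 r' H cs vs2 cs' HL w Hw.
    inversion H; subst. inversion Hw; subst.
    destruct (IHt (S e) d vs1 t' ltac:(assumption) _ _ _ HL _ ltac:(eassumption)) as [mt [M1 M2]].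
    exists (RLam mt). split; now constructor.
  - intros e d vs1 r' H cs vs2 cs' HL w Hw.
    inversion H; subst. inversion Hw; subst.
    apply lsubl_nil_r in HL as [-> ->]. exists BNil. split; constructor.
  - intros a IHa b IHb e d vs1 r' H cs vs2 cs' HL w Hw.
    inversion H; subst. inversion Hw; subst.
    destruct (lsubl_split_r _ _ _ _ _ _ HL ltac:(eassumption))
      as [p1 [p2 [y1 [y2 [P1 [P2 [L1 L2]]]]]]].
    destruct (IHa _ _ _ _ ltac:(eassumption) _ _ _ L1 _ ltac:(eassumption)) as [ma [Ma1 Ma2]].
    destruct (IHb _ _ _ _ ltac:(eassumption) _ _ _ L2 _ ltac:(eassumption)) as [mb [Mb1 Mb2]].
    exists (BCons ma mb).
    split; [eapply lsb_cons; eauto | eapply lsubb_cons; [exact Ma2 | exact Mb2 | perm_solve]].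
Qed.

Lemma lsubv_var_commute_inv n e d cs m vs w :
  lsubv e (RVar n) cs m -> lsubv (e + d) m vs w ->
  exists vs1 vs2 r' cs', Permutation vs (vs1 ++ vs2) /\ lsubv (e + S d) (RVar n) vs1 r' /\
    lsubl d cs vs2 cs' /\ lsubv e r' cs' w.
Proof.
  intros H Hw. inversion H; subst.
  - rewrite Nat.add_comm in Hw.
    destruct (proj1 (proj2 lsub_lift_below_inv) _ d _ _ _ 0 ltac:(lia) Hw) as [u [Hu ->]].
    exists [], vs, (RVar n), [u]. split; [|split; [|split]]; auto.
    + constructor; lia.
    + now apply lsubl_one.
    + constructor.
  - inversion Hw; subst; try lia.
    exists [], [], (RVar n), []. split; [|split; [|split]]; auto using lsubl_nil; constructor; lia.
  - inversion Hw; subst.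
    + exists [v], [], (vlift (e + S d) 0 v), []. split; [|split; [|split]].
      * now rewrite app_nil_r.
      * replace n with (e + S d) by lia. constructor.
      * apply lsubl_nil.
      * rewrite vlift_split. apply lsub_unused.
    + exists [], [], (RVar n), [].
      split; [|split; [|split]]; auto using lsubl_nil; constructor; lia.
    + exists [], [], (RVar (pred n)), [].
      split; [|split; [|split]]; auto using lsubl_nil; constructor; lia.
Qed.

Lemma lsub_commute_inv :
  (forall r e d cs m, lsub e r cs m -> forall vs w, lsub (e + d) m vs w ->
     exists vs1 vs2 r' cs', Permutation vs (vs1 ++ vs2) /\ lsub (e + S d) r vs1 r' /\
       lsubl d cs vs2 cs' /\ lsub e r' cs' w) /\
  (forall r e d cs m, lsubv e r cs m -> forall vs w, lsubv (e + d) m vs w ->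
     exists vs1 vs2 r' cs', Permutation vs (vs1 ++ vs2) /\ lsubv (e + S d) r vs1 r' /\
       lsubl d cs vs2 cs' /\ lsubv e r' cs' w) /\
  (forall r e d cs m, lsubb e r cs m -> forall vs w, lsubb (e + d) m vs w ->
     exists vs1 vs2 r' cs', Permutation vs (vs1 ++ vs2) /\ lsubb (e + S d) r vs1 r' /\
       lsubl d cs vs2 cs' /\ lsubb e r' cs' w).
Proof.
  apply syntax_ind.
  - intros a IHa b IHb e d cs m H vs w Hw. inversion H; subst. inversion Hw; subst.
    destruct (IHa _ _ _ _ ltac:(eassumption) _ _ ltac:(eassumption))
      as [x1 [y1 [a' [q1 [Pa [Ha [La Wa]]]]]]].
    destruct (IHb _ _ _ _ ltac:(eassumption) _ _ ltac:(eassumption))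
      as [x2 [y2 [b' [q2 [Pb [Hb [Lb Wb]]]]]]].
    exists (x1 ++ x2), (y1 ++ y2), (RApp a' b'), (q1 ++ q2).
    split; [perm_solve | split; [now apply ls_app with x1 x2 | split]];
      [|now apply ls_app with q1 q2].
    eapply lsubl_perm; [symmetry; eassumption | reflexivity | reflexivity | now apply lsubl_app].
  - intros b IHb e d cs m H vs w Hw. inversion H; subst. inversion Hw; subst.
    destruct (IHb _ _ _ _ ltac:(eassumption) _ _ ltac:(eassumption))
      as [x1 [y1 [a' [q1 [Pa [Ha [La Wa]]]]]]].
    exists x1, y1, (RBag a'), q1. split; [|split; [|split]]; auto; now constructor.
  - intros. eapply lsubv_var_commute_inv; eauto.
  - intros t IHt e d cs m H vs w Hw. inversion H; subst. inversion Hw; subst.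
    destruct (IHt (S e) d _ _ ltac:(eassumption) _ _ ltac:(eassumption))
      as [x1 [y1 [a' [q1 [Pa [Ha [La Wa]]]]]]].
    exists x1, y1, (RLam a'), q1. split; [|split; [|split]]; auto; now constructor.
  - intros e d cs m H vs w Hw. inversion H; subst. inversion Hw; subst.
    exists [], [], BNil, []. split; [|split; [|split]]; auto using lsubl_nil; constructor.
  - intros a IHa b IHb e d cs m H vs w Hw. inversion H; subst. inversion Hw; subst.
    destruct (IHa _ _ _ _ ltac:(eassumption) _ _ ltac:(eassumption))
      as [x1 [y1 [a1 [q1 [Pa [Ha [La Wa]]]]]]].
    destruct (IHb _ _ _ _ ltac:(eassumption) _ _ ltac:(eassumption))
      as [x2 [y2 [b1 [q2 [Pb [Hb [Lb Wb]]]]]]].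
    exists (x1 ++ x2), (y1 ++ y2), (BCons a1 b1), (q1 ++ q2).
    split; [perm_solve | split; [now apply lsb_cons with x1 x2 | split]];
      [|now apply lsb_cons with q1 q2].
    eapply lsubl_perm; [symmetry; eassumption | reflexivity | reflexivity | now apply lsubl_app].
Qed.

(** * Reduction and linear substitution *)

Scheme rstep_ind' := Induction for rstep Sort Prop
  with rvstep_ind' := Induction for rvstep Sort Prop
  with rbstep_ind' := Induction for rbstep Sort Prop.
Combined Scheme rstep_mut_ind from rstep_ind', rvstep_ind', rbstep_ind'.

Lemma rstep_ext t T T' : rstep t T -> (forall x, T x <-> T' x) -> rstep t T'.
Proof. intros H E. now rewrite <- (set_ext _ _ E). Qed.
Lemma rvstep_ext v V V' : rvstep v V -> (forall x, V x <-> V' x) -> rvstep v V'.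
Proof. intros H E. now rewrite <- (set_ext _ _ E). Qed.
Lemma rbstep_ext b B B' : rbstep b B -> (forall x, B x <-> B' x) -> rbstep b B'.
Proof. intros H E. now rewrite <- (set_ext _ _ E). Qed.

Ltac img_iff := intro; unfold img; split; intros;
  repeat match goal with H : exists _, _ |- _ => destruct H | H : _ /\ _ |- _ => destruct H end;
  subst; try easy; eauto 7.

Lemma bag_list_blift k c b : bag_list (blift k c b) = map (vlift k c) (bag_list b).
Proof. induction b; simpl; f_equal; auto. Qed.

Lemma rstep_lift :
  (forall t T, rstep t T -> forall k c, rstep (rlift k c t) (img (rlift k c) T)) /\
  (forall v V, rvstep v V -> forall k c, rvstep (vlift k c v) (img (vlift k c) V)) /\
  (forall b B, rbstep b B -> forall k c, rbstep (blift k c b) (img (blift k c) B)).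
Proof.
  apply rstep_mut_ind; intros; simpl.
  - eapply rstep_ext; [apply rs_beta|]. intro w. rewrite bag_list_blift. split.
    + intro H. apply (proj1 lsub_lift_above_inv) with (d := 0) (c := c); [lia|].
      now rewrite Nat.sub_0_r.
    + intros [u [Hu ->]]. pose proof (proj1 lsub_lift_above _ _ _ _ Hu k c) as H.
      rewrite Nat.sub_0_r in H. auto with arith.
  - eapply rstep_ext; [apply rs_zero|img_iff]. now rewrite bag_list_blift, length_map.
  - eapply rstep_ext; [apply rs_sigma1|img_iff]; simpl;
      rewrite (proj1 lift_lift_comm), Nat.add_1_r by lia; eauto.
  - eapply rstep_ext; [apply rs_sigma3|img_iff]; simpl;
      rewrite (proj1 (proj2 lift_lift_comm)), Nat.add_1_r by lia; eauto.
  - eapply rstep_ext; [apply rs_appl; eauto|img_iff].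
  - eapply rstep_ext; [apply rs_appr; eauto|img_iff].
  - eapply rstep_ext; [apply rs_bag; eauto|img_iff].
  - eapply rvstep_ext; [apply rvs_lam; eauto|img_iff].
  - eapply rbstep_ext; [apply rbs_head; eauto|img_iff].
  - eapply rbstep_ext; [apply rbs_tail; eauto|img_iff].
Qed.

Ltac inv_lsub := repeat match goal with
  | H : lsubb _ (sing _) _ _ |- _ => unfold sing in H
  | H : lsub _ (RApp _ _) _ _ |- _ => inversion H; subst; clear H
  | H : lsub _ (RBag _) _ _ |- _ => inversion H; subst; clear H
  | H : lsubb _ (BCons _ _) _ _ |- _ => inversion H; subst; clear H
  | H : lsubb _ BNil _ _ |- _ => inversion H; subst; clear H
  | H : lsubv _ (RLam _) _ _ |- _ => inversion H; subst; clear H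
  end.

Ltac apply_cong_step H :=
  first [ exact (rs_appl _ _ _ H) | exact (rs_appr _ _ _ H) | exact (rs_bag _ _ H)
        | exact (rvs_lam _ _ H) | exact (rbs_head _ _ _ H) | exact (rbs_tail _ _ _ H) ].

Ltac lsub_rstep_cong IH :=
  let HU := fresh "HU" in let HU' := fresh "HU'" in
  let Ht1 := fresh "Ht1" in let Hw' := fresh "Hw'" in
  intros; inv_lsub;
  match goal with H : _ |- _ => destruct (IH _ _ _ H) as [? [HU HU']] end;
  eexists; split; [apply_cong_step HU|];
  intros ? [? [Hw' ->]]; destruct (HU' _ Hw') as [? [Ht1 ?]];
  eexists; split; [eexists; split; [exact Ht1 | reflexivity] | econstructor; eauto].

Lemma lsub_rstep :
  (forall t T, rstep t T -> forall d vs u, lsub d t vs u ->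
     exists U, rstep u U /\ forall w, U w -> exists t', T t' /\ lsub d t' vs w) /\
  (forall t T, rvstep t T -> forall d vs u, lsubv d t vs u ->
     exists U, rvstep u U /\ forall w, U w -> exists t', T t' /\ lsubv d t' vs w) /\
  (forall t T, rbstep t T -> forall d vs u, lsubb d t vs u ->
     exists U, rbstep u U /\ forall w, U w -> exists t', T t' /\ lsubb d t' vs w).
Proof.
  apply rstep_mut_ind; try (intros until 1; intro IH; lsub_rstep_cong IH; fail).
  - intros r c d vs u H. inv_lsub. eexists. split; [apply rs_beta|]. intros w Hw.
    destruct (proj1 lsub_commute r 0 d _ _ ltac:(eassumption) _ _ _
                (lsubb_lsubl _ _ _ _ ltac:(eassumption)) w Hw) as [m [M1 M2]].
    exists m. split; auto. eapply lsub_perm; [eassumption | perm_solve].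
  - intros b u0 Hl d vs u H. inv_lsub. eexists. split.
    + apply rs_zero. erewrite lsubb_length; eauto.
    + intros w [].
  - intros r s1 s2 d vs u H. inv_lsub. eexists. split; [apply rs_sigma1|].
    intros w <-. eexists. split; [reflexivity|].
    eapply lsub_app; [apply lsub_sing; constructor;
      eapply lsub_app; [eassumption | apply lsub_lift1; eassumption | reflexivity]
    | eassumption | perm_solve].
  - intros v r s d vs u H. inv_lsub. eexists. split; [apply rs_sigma3|].
    intros w <-. eexists. split; [reflexivity|].
    eapply lsub_app; [apply lsub_sing; constructor;
      eapply lsub_app; [apply lsub_sing, lsubv_lift1; eassumption | eassumption | reflexivity]
    | eassumption | perm_solve].
Qed.

Ltac lsub_cover_cong IH :=
  let Hs := fresh "Hs" in let A1 := fresh "A1" in let A2 := fresh "A2" in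
  let A3 := fresh "A3" in
  intros ? ? ? ? [? [Hs ->]] ?; inv_lsub;
  match goal with H : _ |- _ => destruct (IH _ _ _ _ Hs H) as [? [? [A1 [A2 A3]]]] end;
  eexists; eexists; split; [econstructor; eauto | split; [apply_cong_step A2 | eexists; eauto]].

Lemma lsub_rstep_cover :
  (forall t T, rstep t T -> forall d vs t' w, T t' -> lsub d t' vs w ->
     exists u U, lsub d t vs u /\ rstep u U /\ U w) /\
  (forall t T, rvstep t T -> forall d vs t' w, T t' -> lsubv d t' vs w ->
     exists u U, lsubv d t vs u /\ rvstep u U /\ U w) /\
  (forall t T, rbstep t T -> forall d vs t' w, T t' -> lsubb d t' vs w ->
     exists u U, lsubb d t vs u /\ rbstep u U /\ U w).
Proof.
  apply rstep_mut_ind; try (intros until 1; intro IH; lsub_cover_cong IH; fail).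
  - intros r c d vs t' w H1 H2.
    destruct (proj1 lsub_commute_inv r 0 d _ _ H1 _ _ H2)
      as [vs1 [vs2 [r' [cs' [P [Hr [HL Hw]]]]]]].
    destruct (lsubl_lsubb _ _ _ _ HL) as [c' [Hc Pc]].
    exists (RApp (sbag (RLam r')) (RBag c')), (fun w => lsub 0 r' (bag_list c') w).
    split; [|split; [apply rs_beta|]].
    + eapply lsub_app; [apply lsub_sing; constructor; exact Hr | constructor; exact Hc | exact P].
    + eapply lsub_perm; eauto. now apply Permutation_sym.
  - intros b u0 Hl d vs t' w [].
  - intros r s1 s2 d vs t' w <- H2. inv_lsub.
    destruct (lsub_lift1_inv _ _ _ _ ltac:(eassumption)) as [s2' [Hs2 ->]].
    eexists; eexists; split; [|split; [apply rs_sigma1 | reflexivity]].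
    eapply lsub_app;
      [eapply lsub_app; [apply lsub_sing; constructor; eassumption | eassumption | reflexivity]
      | eassumption | perm_solve].
  - intros v r s d vs t' w <- H2. inv_lsub.
    destruct (lsubv_lift1_inv _ _ _ _ ltac:(eassumption)) as [v1 [Hv ->]].
    eexists; eexists; split; [|split; [apply rs_sigma3 | reflexivity]].
    eapply lsub_app; [apply lsub_sing; eassumption
      | eapply lsub_app; [apply lsub_sing; constructor; eassumption | eassumption | reflexivity]
      | perm_solve].
Qed.

Lemma perm_pick (vs vs1 vs2 rest : list rval) v :
  Permutation vs (vs1 ++ vs2) -> Permutation vs (v :: rest) ->
  (exists r1, Permutation vs1 (v :: r1) /\ Permutation rest (r1 ++ vs2)) \/
  (exists r2, Permutation vs2 (v :: r2) /\ Permutation rest (vs1 ++ r2)).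
Proof.
  intros P1 P2. assert (Hin : In v (vs1 ++ vs2)) by (rewrite <- P1, P2; now left).
  apply in_app_or in Hin as [Hin | Hin]; apply in_split in Hin as [a [b ->]].
  - left. exists (a ++ b). split; [apply Permutation_sym, Permutation_middle | perm_solve].
  - right. exists (a ++ b). split; [apply Permutation_sym, Permutation_middle | perm_solve].
Qed.

Ltac no_arg := match goal with H : Permutation [] (_ :: _) |- _ =>
  destruct (Permutation_nil_cons H) end.

Lemma lsub_arg_step :
  (forall d t vs u, lsub d t vs u -> forall v V rest, Permutation vs (v :: rest) -> rvstep v V ->
     exists U, rstep u U /\ forall w, U w -> exists v', V v' /\ lsub d t (v' :: rest) w) /\
  (forall d t vs u, lsubv d t vs u -> forall v V rest, Permutation vs (v :: rest) -> rvstep v V ->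
     exists U, rvstep u U /\ forall w, U w -> exists v', V v' /\ lsubv d t (v' :: rest) w) /\
  (forall d t vs u, lsubb d t vs u -> forall v V rest, Permutation vs (v :: rest) -> rvstep v V ->
     exists U, rbstep u U /\ forall w, U w -> exists v', V v' /\ lsubb d t (v' :: rest) w).
Proof.
  apply lsub_mut_ind; [| | | intros; no_arg .. | | intros; no_arg |].
  - intros d s u vs vs1 vs2 s' u' P Hs IHs Hu IHu v V rest Pv HV.
    destruct (perm_pick _ _ _ _ _ P Pv) as [[r1 [Q1 Q2]] | [r2 [Q1 Q2]]].
    + destruct (IHs _ _ _ Q1 HV) as [U [HU HU']]. exists (img (fun x => RApp x u') U).
      split; [now apply rs_appl|]. intros ? [w [Hw ->]].
      destruct (HU' _ Hw) as [x [Hx Hs']]. exists x. split; auto.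
      eapply lsub_app; [exact Hs' | exact Hu | perm_solve].
    + destruct (IHu _ _ _ Q1 HV) as [U [HU HU']]. exists (img (fun x => RApp s' x) U).
      split; [now apply rs_appr|]. intros ? [w [Hw ->]].
      destruct (HU' _ Hw) as [x [Hx Hu']]. exists x. split; auto.
      eapply lsub_app; [exact Hs | exact Hu' | perm_solve].
  - intros d b vs b' _ IH v V rest Pv HV.
    destruct (IH _ _ _ Pv HV) as [U [HU HU']]. exists (img RBag U).
    split; [now apply rs_bag|]. intros ? [w [Hw ->]].
    destruct (HU' _ Hw) as [x [? ?]]. exists x. split; auto. now constructor.
  - intros d x v V rest Pv HV. apply Permutation_length_1_inv in Pv. injection Pv as -> ->.
    exists (img (vlift d 0) V). split; [now apply rstep_lift|].
    intros ? [v' [Hv ->]]. exists v'. split; auto. constructor.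
  - intros d t vs t' _ IH v V rest Pv HV.
    destruct (IH _ _ _ Pv HV) as [U [HU HU']]. exists (img RLam U).
    split; [now apply rvs_lam|]. intros ? [w [Hw ->]].
    destruct (HU' _ Hw) as [x [? ?]]. exists x. split; auto. now constructor.
  - intros d a b vs vs1 vs2 a' b' P Ha IHa Hb IHb v V rest Pv HV.
    destruct (perm_pick _ _ _ _ _ P Pv) as [[r1 [Q1 Q2]] | [r2 [Q1 Q2]]].
    + destruct (IHa _ _ _ Q1 HV) as [U [HU HU']]. exists (img (fun x => BCons x b') U).
      split; [now apply rbs_head|]. intros ? [w [Hw ->]].
      destruct (HU' _ Hw) as [x [Hx Ha']]. exists x. split; auto.
      eapply lsubb_cons; [exact Ha' | exact Hb | perm_solve].
    + destruct (IHb _ _ _ Q1 HV) as [U [HU HU']]. exists (img (fun x => BCons a' x) U).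
      split; [now apply rbs_tail|]. intros ? [w [Hw ->]].
      destruct (HU' _ Hw) as [x [Hx Hb']]. exists x. split; auto.
      eapply lsubb_cons; [exact Ha | exact Hb' | perm_solve].
Qed.

Lemma lsub_arg_step_cover :
  (forall d t vs w, lsub d t vs w -> forall v' rest, Permutation vs (v' :: rest) ->
     forall v V, V v' -> rvstep v V -> exists u U, lsub d t (v :: rest) u /\ rstep u U /\ U w) /\
  (forall d t vs w, lsubv d t vs w -> forall v' rest, Permutation vs (v' :: rest) ->
     forall v V, V v' -> rvstep v V -> exists u U, lsubv d t (v :: rest) u /\ rvstep u U /\ U w) /\
  (forall d t vs w, lsubb d t vs w -> forall v' rest, Permutation vs (v' :: rest) ->
     forall v V, V v' -> rvstep v V -> exists u U, lsubb d t (v :: rest) u /\ rbstep u U /\ U w).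
Proof.
  apply lsub_mut_ind; [| | | intros; no_arg .. | | intros; no_arg |].
  - intros d s u vs vs1 vs2 s' u' P Hs IHs Hu IHu v' rest Pv v V HV' HV.
    destruct (perm_pick _ _ _ _ _ P Pv) as [[r1 [Q1 Q2]] | [r2 [Q1 Q2]]].
    + destruct (IHs _ _ Q1 _ _ HV' HV) as [x [X [Hx [HX HXs']]]].
      exists (RApp x u'), (img (fun y => RApp y u') X).
      split; [eapply lsub_app; [exact Hx | exact Hu | perm_solve] |].
      split; [now apply rs_appl | eexists; eauto].
    + destruct (IHu _ _ Q1 _ _ HV' HV) as [x [X [Hx [HX HXu']]]].
      exists (RApp s' x), (img (fun y => RApp s' y) X).
      split; [eapply lsub_app; [exact Hs | exact Hx | perm_solve] |].
      split; [now apply rs_appr | eexists; eauto].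
  - intros d b vs b' _ IH v' rest Pv v V HV' HV.
    destruct (IH _ _ Pv _ _ HV' HV) as [x [X [Hx [HX HXb']]]].
    exists (RBag x), (img RBag X).
    split; [now constructor | split; [now apply rs_bag | eexists; eauto]].
  - intros d x v' rest Pv v V HV' HV. apply Permutation_length_1_inv in Pv. injection Pv as -> ->.
    exists (vlift d 0 v), (img (vlift d 0) V).
    split; [constructor | split; [now apply rstep_lift | eexists; eauto]].
  - intros d t vs t' _ IH v' rest Pv v V HV' HV.
    destruct (IH _ _ Pv _ _ HV' HV) as [x [X [Hx [HX HXt']]]].
    exists (RLam x), (img RLam X).
    split; [now constructor | split; [now apply rvs_lam | eexists; eauto]].
  - intros d a b vs vs1 vs2 a' b' P Ha IHa Hb IHb v' rest Pv v V HV' HV.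
    destruct (perm_pick _ _ _ _ _ P Pv) as [[r1 [Q1 Q2]] | [r2 [Q1 Q2]]].
    + destruct (IHa _ _ Q1 _ _ HV' HV) as [x [X [Hx [HX HXa']]]].
      exists (BCons x b'), (img (fun y => BCons y b') X).
      split; [eapply lsubb_cons; [exact Hx | exact Hb | perm_solve] |].
      split; [now apply rbs_head | eexists; eauto].
    + destruct (IHb _ _ Q1 _ _ HV' HV) as [x [X [Hx [HX HXb']]]].
      exists (BCons a' x), (img (fun y => BCons a' y) X).
      split; [eapply lsubb_cons; [exact Ha | exact Hx | perm_solve] |].
      split; [now apply rbs_tail | eexists; eauto].
Qed.

Lemma lsub_reduces_into d t T vs : rstep t T ->
  reduces_into rstep (lsub d t vs) (fun w => exists t', T t' /\ lsub d t' vs w).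
Proof.
  intro H. split.
  - intros u Hu. exact (proj1 lsub_rstep _ _ H _ _ _ Hu).
  - intros w [t' [Ht' Hw]].
    destruct (proj1 lsub_rstep_cover _ _ H _ _ _ _ Ht' Hw) as [u [U [? [? ?]]]].
    exists u, U. auto.
Qed.

Lemma lsub_arg_reduces_into d t v V rest : rvstep v V ->
  reduces_into rstep (lsub d t (v :: rest)) (fun w => exists v', V v' /\ lsub d t (v' :: rest) w).
Proof.
  intro H. split.
  - intros u Hu. exact (proj1 lsub_arg_step _ _ _ _ Hu _ _ _ (Permutation_refl _) H).
  - intros w [v' [Hv' Hw]].
    destruct (proj1 lsub_arg_step_cover _ _ _ _ Hw _ _ (Permutation_refl _) _ _ Hv' H)
      as [u [U [? [? ?]]]].
    exists u, U. auto.
Qed.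

(** * Termination and finite branching *)

Fixpoint tsize (t : rterm) : nat :=
  match t with RApp s u => 1 + tsize s + tsize u | RBag b => 1 + bsize b end
with vsize (v : rval) : nat :=
  match v with RVar _ => 1 | RLam t => 1 + tsize t end
with bsize (b : rbag) : nat :=
  match b with BNil => 0 | BCons v b => vsize v + bsize b end.

(* A polynomial interpretation, decreasing along sigma1 and sigma3 (which preserve the size). *)
Fixpoint tpi (t : rterm) : nat :=
  match t with RApp s u => tpi s * tpi u | RBag b => 2 + bpi b end
with vpi (v : rval) : nat :=
  match v with RVar _ => 2 | RLam t => tpi t + 1 end
with bpi (b : rbag) : nat :=
  match b with BNil => 0 | BCons v b => vpi v + bpi b end.

Definition vsum (l : list rval) : nat := list_sum (map vsize l).

Lemma size_lift :
  (forall t k c, tsize (rlift k c t) = tsize t /\ tpi (rlift k c t) = tpi t) /\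
  (forall v k c, vsize (vlift k c v) = vsize v /\ vpi (vlift k c v) = vpi v) /\
  (forall b k c, bsize (blift k c b) = bsize b /\ bpi (blift k c b) = bpi b).
Proof.
  apply syntax_ind; intros; simpl.
  - destruct (H k c), (H0 k c). lia.
  - destruct (H k c). lia.
  - destruct (c <=? n); simpl; lia.
  - destruct (H k (S c)). lia.
  - lia.
  - destruct (H k c), (H0 k c). lia.
Qed.

Lemma tpi_ge2 : (forall t, 2 <= tpi t) /\ (forall v, 2 <= vpi v).
Proof.
  enough (H : (forall t, 2 <= tpi t) /\ (forall v, 2 <= vpi v) /\ (forall b : rbag, True)) by tauto.
  apply syntax_ind; intros; simpl; nia.
Qed.

Lemma bsize_vsum b : bsize b = vsum (bag_list b).
Proof. induction b; simpl; unfold vsum in *; simpl; lia. Qed.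

(* Each of the [length vs] substituted variables has size 1. *)
Lemma lsub_size :
  (forall d t vs u, lsub d t vs u -> tsize u + length vs = tsize t + vsum vs) /\
  (forall d t vs u, lsubv d t vs u -> vsize u + length vs = vsize t + vsum vs) /\
  (forall d t vs u, lsubb d t vs u -> bsize u + length vs = bsize t + vsum vs).
Proof.
  apply lsub_mut_ind; intros; simpl in *; unfold vsum in *; simpl; try lia.
  - rewrite (Permutation_length p), p, length_app, map_app, list_sum_app. lia.
  - destruct (proj1 (proj2 size_lift) v d 0). lia.
  - rewrite (Permutation_length p), p, length_app, map_app, list_sum_app. lia.
Qed.

Definition lt_mu (x y : rterm) : Prop :=
  tsize x < tsize y \/ (tsize x = tsize y /\ tpi x < tpi y).

Lemma lt_mu_wf : well_founded lt_mu.
Proof.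
  assert (H : forall n m x, tsize x <= n -> tpi x <= m -> Acc lt_mu x).
  { induction n as [n IHn] using lt_wf_ind. induction m as [m IHm] using lt_wf_ind.
    intros x Hs Hp. constructor. intros y [Hy | [Hy1 Hy2]].
    - apply (IHn (tsize y)) with (tpi y); lia.
    - apply (IHm (tpi y)); lia. }
  intro x. now apply (H (tsize x) (tpi x)).
Qed.

Lemma rstep_decreasing :
  (forall t T, rstep t T -> forall y, T y -> lt_mu y t) /\
  (forall v V, rvstep v V -> forall y, V y ->
     vsize y < vsize v \/ (vsize y = vsize v /\ vpi y < vpi v)) /\
  (forall b B, rbstep b B -> forall y, B y ->
     bsize y < bsize b \/ (bsize y = bsize b /\ bpi y < bpi b)).
Proof.
  destruct tpi_ge2 as [P1 P2].
  apply rstep_mut_ind; unfold lt_mu; intros; simpl.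
  - apply (proj1 lsub_size) in H. rewrite <- bsize_vsum in H. lia.
  - destruct H.
  - subst. simpl. destruct (proj1 size_lift s2 1 0) as [-> ->].
    pose proof (P1 t); pose proof (P1 s1); pose proof (P1 s2). right. split; [lia | nia].
  - subst. simpl. destruct (proj1 (proj2 size_lift) v 1 0) as [-> ->].
    pose proof (P1 t); pose proof (P2 v); pose proof (P1 s). right. split; [lia | nia].
  - destruct H0 as [s' [Hs ->]]. apply H in Hs. simpl.
    pose proof (P1 s'); pose proof (P1 s); pose proof (P1 u). nia.
  - destruct H0 as [u' [Hu ->]]. apply H in Hu. simpl.
    pose proof (P1 u'); pose proof (P1 s); pose proof (P1 u). nia.
  - destruct H0 as [b' [Hb ->]]. apply H in Hb. simpl. lia.
  - destruct H0 as [t' [Ht ->]]. apply H in Ht. simpl. lia.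
  - destruct H0 as [v' [Hv ->]]. apply H in Hv. simpl. lia.
  - destruct H0 as [b' [Hb ->]]. apply H in Hb. simpl. lia.
Qed.

Lemma reduct_lt_mu y x : reduct rstep y x -> lt_mu y x.
Proof. intros [E [HE Hy]]. eapply rstep_decreasing; eauto. Qed.

Lemma rstep_wf : well_founded (reduct rstep).
Proof. apply (wf_incl _ _ _ reduct_lt_mu lt_mu_wf). Qed.

Lemma lsub_finite :
  (forall t d vs, finite (lsub d t vs)) /\ (forall v d vs, finite (lsubv d v vs)) /\
  (forall b d vs, finite (lsubb d b vs)).
Proof.
  apply syntax_ind; intros.
  - eapply finite_incl.
    + apply (finite_union (splits vs) (fun p w => exists a b,
        lsub d r (fst p) a /\ lsub d r0 (snd p) b /\ w = RApp a b)).
      intros p _. now apply finite_prod.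
    + intros w Hw. inversion Hw; subst.
      destruct (splits_complete vs vs1 vs2) as [a [b [Hin [Pa Pb]]]]; auto.
      exists (a, b). split; auto. exists s', u'. simpl.
      split; [|split]; auto; eapply lsub_perm; eauto; now apply Permutation_sym.
  - eapply finite_incl; [apply (finite_img RBag), H|]. intros w Hw. inversion Hw; subst.
    eexists; eauto.
  - eapply finite_incl; [apply (finite_list (RVar n :: RVar (pred n) :: map (vlift d 0) vs))|].
    intros w Hw. inversion Hw; subst; simpl; auto using in_eq.
  - eapply finite_incl; [apply (finite_img RLam), H|]. intros w Hw. inversion Hw; subst.
    eexists; eauto.
  - eapply finite_incl; [apply (finite_list [BNil])|]. intros w Hw. inversion Hw; simpl; auto.
  - eapply finite_incl.
    + apply (finite_union (splits vs) (fun p w => exists a b,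
        lsubv d r (fst p) a /\ lsubb d r0 (snd p) b /\ w = BCons a b)).
      intros p _. now apply finite_prod.
    + intros w Hw. inversion Hw; subst.
      destruct (splits_complete vs vs1 vs2) as [a [b [Hin [Pa Pb]]]]; auto.
      exists (a, b). split; auto. exists v', b'. simpl.
      split; [|split]; auto; [eapply lsubv_perm | eapply lsubb_perm]; eauto;
        now apply Permutation_sym.
Qed.

Lemma rstep_finite :
  (forall t T, rstep t T -> finite T) /\ (forall v V, rvstep v V -> finite V) /\
  (forall b B, rbstep b B -> finite B).
Proof.
  apply rstep_mut_ind; intros; try apply finite_eq; try now apply finite_img.
  - apply lsub_finite.
  - exists []. simpl. tauto.
Qed.

(** * Local confluence *)

Fixpoint lbag (l : list rval) : rbag :=
  match l with [] => BNil | v :: l => BCons v (lbag l) end.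

Lemma bag_list_lbag l : bag_list (lbag l) = l.
Proof. induction l; simpl; f_equal; auto. Qed.

Lemma lbag_bag_list b : lbag (bag_list b) = b.
Proof. induction b; simpl; f_equal; auto. Qed.

Lemma ctx_appl u : closed_ctx rstep (fun x => RApp x u).
Proof. intros ? ? H. exact (rs_appl _ _ _ H). Qed.

Lemma ctx_appr s : closed_ctx rstep (fun x => RApp s x).
Proof. intros ? ? H. exact (rs_appr _ _ _ H). Qed.

Lemma ctx_bag l1 l2 : closed_ctx rstep (fun x => RBag (lbag (l1 ++ RLam x :: l2))).
Proof.
  intros t T H.
  assert (Hb : forall k, rbstep (lbag (k ++ RLam t :: l2)) (img (fun x => lbag (k ++ RLam x ::
    l2)) T)).
  { induction k as [|a k IH]; simpl.
    - eapply rbstep_ext; [exact (rbs_head _ _ _ (rvs_lam _ _ H)) | img_iff].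
    - eapply rbstep_ext; [exact (rbs_tail _ _ _ IH) | img_iff]. }
  eapply rstep_ext; [exact (rs_bag _ _ (Hb l1)) | img_iff].
Qed.

Lemma ctx_sing : closed_ctx rstep (fun x => sbag (RLam x)).
Proof. exact (ctx_bag [] []). Qed.

Lemma ctx_comp C D :
  closed_ctx rstep C -> closed_ctx rstep D -> closed_ctx rstep (fun x => C (D x)).
Proof. intros HC HD x X H. rewrite <- img_img. now apply HC, HD. Qed.

Ltac solve_ctx := repeat match goal with
  | |- closed_ctx _ (fun x => RApp x ?u) => apply ctx_appl
  | |- closed_ctx _ (fun x => RApp ?s x) => apply ctx_appr
  | |- closed_ctx _ (RApp ?s) => apply ctx_appr
  | |- closed_ctx _ (fun x => sbag (RLam x)) => apply ctx_sing
  | |- closed_ctx _ (fun x => RApp ?s ?u) =>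
      first [ apply (ctx_comp (fun y => RApp y u)) | apply (ctx_comp (fun y => RApp s y)) ]
  | |- closed_ctx _ (fun x => sbag (RLam ?s)) =>
      apply (ctx_comp (fun y => sbag (RLam y)))
  end.

Inductive root_step : rterm -> rset -> Prop :=
| root_beta t b : root_step (RApp (sbag (RLam t)) (RBag b)) (lsub 0 t (bag_list b))
| root_zero b u : length (bag_list b) <> 1 -> root_step (RApp (RBag b) u) (fun _ => False)
| root_sigma1 t s1 s2 : root_step (RApp (RApp (sbag (RLam t)) s1) s2)
    (eq (RApp (sbag (RLam (RApp t (rlift 1 0 s2)))) s1))
| root_sigma3 v t s : root_step (RApp (sbag v) (RApp (sbag (RLam t)) s))
    (eq (RApp (sbag (RLam (RApp (sbag (vlift 1 0 v)) t))) s)).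

Lemma root_step_det e E1 E2 : root_step e E1 -> root_step e E2 -> E1 = E2.
Proof. intros H1 H2. destruct H1; inversion H2; subst; simpl in *; auto; easy. Qed.

Lemma rstep_app_inv s u E : rstep (RApp s u) E ->
  root_step (RApp s u) E \/ (exists S, rstep s S /\ E = img (fun x => RApp x u) S) \/
  (exists U, rstep u U /\ E = img (fun x => RApp s x) U).
Proof.
  intro H. inversion H; subst; [left; now constructor .. | right; left | right; right]; eauto.
Qed.

Lemma rbstep_inv b B : rbstep b B -> exists l1 t l2 T,
  bag_list b = l1 ++ RLam t :: l2 /\ rstep t T /\ B = img (fun x => lbag (l1 ++ RLam x :: l2)) T.
Proof.
  revert B. induction b as [|v b IH]; intros B H; inversion H; subst.
  - inversion H3; subst. exists [], t, (bag_list b), T. repeat split; auto.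
    apply set_ext. simpl. rewrite lbag_bag_list. img_iff.
  - destruct (IH _ H3) as [l1 [t [l2 [T [E1 [E2 ->]]]]]].
    exists (v :: l1), t, l2, T. simpl. rewrite E1. repeat split; auto. apply set_ext. img_iff.
Qed.

Lemma rstep_bag_inv b E : rstep (RBag b) E -> exists l1 t l2 T,
  bag_list b = l1 ++ RLam t :: l2 /\ rstep t T /\
  E = img (fun x => RBag (lbag (l1 ++ RLam x :: l2))) T.
Proof.
  intro H. inversion H; subst. destruct (rbstep_inv _ _ H1) as [l1 [t [l2 [T [E1 [E2 ->]]]]]].
  exists l1, t, l2, T. repeat split; auto. apply set_ext. img_iff.
Qed.

Lemma rstep_sing_inv v E : rstep (sbag v) E ->
  exists t T, v = RLam t /\ rstep t T /\ E = img (fun x => sbag (RLam x)) T.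
Proof.
  intro H. apply rstep_bag_inv in H as [[|a l1] [t [l2 [T [E1 [E2 ->]]]]]];
    simpl in E1; injection E1 as -> E1.
  - subst. eauto.
  - destruct l1; discriminate.
Qed.

Lemma ctx_lift k c : closed_ctx rstep (rlift k c).
Proof. intros x X H. now apply rstep_lift. Qed.

Lemma peak_sigma1_fun t T s1 s2 : rstep t T ->
  joinable rstep (eq (RApp (sbag (RLam (RApp t (rlift 1 0 s2)))) s1))
    (img (fun x => RApp (RApp (sbag (RLam x)) s1) s2) T).
Proof.
  intro H. apply (joinable_ctx_step _ (fun x => RApp (sbag (RLam (RApp x (rlift 1 0 s2)))) s1));
    auto; [solve_ctx | intros; apply rs_sigma1].
Qed.

Lemma peak_sigma1_arg1 t s1 S1 s2 : rstep s1 S1 ->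
  joinable rstep (eq (RApp (sbag (RLam (RApp t (rlift 1 0 s2)))) s1))
    (img (fun x => RApp (RApp (sbag (RLam t)) x) s2) S1).
Proof.
  intro H. apply (joinable_ctx_step _ (fun x => RApp (sbag (RLam (RApp t (rlift 1 0 s2)))) x));
    auto; [solve_ctx | intros; apply rs_sigma1].
Qed.

Lemma peak_sigma1_arg2 t s1 s2 S2 : rstep s2 S2 ->
  joinable rstep (eq (RApp (sbag (RLam (RApp t (rlift 1 0 s2)))) s1))
    (img (fun x => RApp (RApp (sbag (RLam t)) s1) x) S2).
Proof.
  intro H. apply (joinable_ctx_step _ (fun y => RApp (sbag (RLam (RApp t (rlift 1 0 y)))) s1));
    auto; [apply (ctx_comp (fun y => RApp (sbag (RLam (RApp t y))) s1));
      [solve_ctx | apply ctx_lift]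
          | intros; apply rs_sigma1].
Qed.

Lemma peak_sigma3_val r R t s : rstep r R ->
  joinable rstep (eq (RApp (sbag (RLam (RApp (sbag (vlift 1 0 (RLam r))) t))) s))
    (img (fun x => RApp (sbag (RLam x)) (RApp (sbag (RLam t)) s)) R).
Proof.
  intro H.
  apply (joinable_ctx_step _ (fun y => RApp (sbag (RLam (RApp (sbag (RLam (rlift 1 1 y))) t))) s));
    auto; [apply (ctx_comp (fun y => RApp (sbag (RLam (RApp (sbag (RLam y)) t))) s));
           [solve_ctx | apply ctx_lift] | intros; apply rs_sigma3].
Qed.

Lemma peak_sigma3_body v t T s : rstep t T ->
  joinable rstep (eq (RApp (sbag (RLam (RApp (sbag (vlift 1 0 v)) t))) s))
    (img (fun x => RApp (sbag v) (RApp (sbag (RLam x)) s)) T).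
Proof.
  intro H. apply (joinable_ctx_step _ (fun y => RApp (sbag (RLam (RApp (sbag (vlift 1 0 v)) y)))
    s));
    auto; [solve_ctx | intros; apply rs_sigma3].
Qed.

Lemma peak_sigma3_arg v t s S : rstep s S ->
  joinable rstep (eq (RApp (sbag (RLam (RApp (sbag (vlift 1 0 v)) t))) s))
    (img (fun x => RApp (sbag v) (RApp (sbag (RLam t)) x)) S).
Proof.
  intro H. apply (joinable_ctx_step _ (fun y => RApp (sbag (RLam (RApp (sbag (vlift 1 0 v)) t)))
    y));
    auto; [solve_ctx | intros; apply rs_sigma3].
Qed.

Lemma lsub_app_unused_r t s vs w :
  lsub 0 (RApp t (rlift 1 0 s)) vs w <-> exists x, lsub 0 t vs x /\ w = RApp x s.
Proof.
  split.
  - intro H. inversion H; subst.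
    match goal with Hh : lsub 0 (rlift 1 0 s) _ _ |- _ =>
      destruct (proj1 lsub_unused_inv _ _ _ _ Hh); subst end.
    exists s'. split; auto. eapply lsub_perm; eauto. perm_solve.
  - intros [x [Hx ->]]. eapply lsub_app; [exact Hx | apply lsub_unused | now rewrite app_nil_r].
Qed.

Lemma lsub_app_unused_l v t vs w :
  lsub 0 (RApp (sbag (vlift 1 0 v)) t) vs w <-> exists x, lsub 0 t vs x /\ w = RApp (sbag v) x.
Proof.
  split.
  - intro H. inversion H; subst.
    match goal with Hh : lsub 0 (RBag _) _ _ |- _ =>
      destruct (proj1 lsub_unused_inv (sbag v) _ _ _ Hh); subst end.
    exists u'. split; auto. eapply lsub_perm; eauto. perm_solve.
  - intros [x [Hx ->]]. eapply lsub_app;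
      [apply (proj1 lsub_unused (sbag v)) | exact Hx | reflexivity].
Qed.

Lemma peak_sigma1_beta t c s2 :
  joinable rstep (eq (RApp (sbag (RLam (RApp t (rlift 1 0 s2)))) (RBag c)))
    (img (fun x => RApp x s2) (lsub 0 t (bag_list c))).
Proof.
  eexists. split; [|apply reduces_into_refl]. apply reduces_into_single, red_one.
  eapply rstep_ext; [apply rs_beta | intro w; rewrite lsub_app_unused_r; revert w; img_iff].
Qed.

Lemma peak_sigma3_beta v t c :
  joinable rstep (eq (RApp (sbag (RLam (RApp (sbag (vlift 1 0 v)) t))) (RBag c)))
    (img (fun x => RApp (sbag v) x) (lsub 0 t (bag_list c))).
Proof.
  eexists. split; [|apply reduces_into_refl]. apply reduces_into_single, red_one.
  eapply rstep_ext; [apply rs_beta | intro w; rewrite lsub_app_unused_l; revert w; img_iff].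
Qed.

Lemma rlift_1_1_lift s : rlift 1 1 (rlift 1 0 s) = rlift 1 0 (rlift 1 0 s).
Proof. now rewrite !(proj1 lift_lift_merge) by lia. Qed.

Lemma vlift_1_1_lift v : vlift 1 1 (vlift 1 0 v) = vlift 1 0 (vlift 1 0 v).
Proof. now rewrite !(proj1 (proj2 lift_lift_merge)) by lia. Qed.

Lemma peak_sigma1_sigma3 t r s0 s2 :
  joinable rstep (eq (RApp (sbag (RLam (RApp t (rlift 1 0 s2)))) (RApp (sbag (RLam r)) s0)))
    (img (fun x => RApp x s2) (eq (RApp (sbag (RLam (RApp (sbag (vlift 1 0 (RLam t))) r))) s0))).
Proof.
  rewrite img_eq. exists (eq (RApp (sbag (RLam (RApp (sbag (RLam
    (RApp (rlift 1 1 t) (rlift 1 0 (rlift 1 0 s2))))) r))) s0)).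
  split; apply reduces_into_single.
  - apply red_one. pose proof (rs_sigma3 (RLam (RApp t (rlift 1 0 s2))) r s0) as H. simpl in H.
    now rewrite rlift_1_1_lift in H.
  - eapply red_step_eq; [apply rs_sigma1|]. apply red_one.
    pose proof (ctx_appl s0 _ _ (ctx_sing _ _ (rs_sigma1 (rlift 1 1 t) r (rlift 1 0 s2)))) as H.
    now rewrite !img_eq in H.
Qed.

Lemma peak_sigma3_sigma3 v t r s :
  joinable rstep
    (eq (RApp (sbag (RLam (RApp (sbag (vlift 1 0 v)) t))) (RApp (sbag (RLam r)) s)))
    (img (fun x => RApp (sbag v) x)
       (eq (RApp (sbag (RLam (RApp (sbag (vlift 1 0 (RLam t))) r))) s))).
Proof.
  rewrite img_eq. exists (eq (RApp (sbag (RLam (RApp (sbag (RLam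
    (RApp (sbag (vlift 1 0 (vlift 1 0 v))) (rlift 1 1 t)))) r))) s)).
  split; apply reduces_into_single.
  - apply red_one. pose proof (rs_sigma3 (RLam (RApp (sbag (vlift 1 0 v)) t)) r s) as H. simpl in H.
    now rewrite vlift_1_1_lift in H.
  - eapply red_step_eq; [apply rs_sigma3|]. apply red_one.
    pose proof (ctx_appl s _ _ (ctx_sing _ _ (rs_sigma3 (vlift 1 0 v) (rlift 1 1 t) r))) as H.
    now rewrite !img_eq in H.
Qed.

Lemma peak_beta_body t T b : rstep t T ->
  joinable rstep (lsub 0 t (bag_list b)) (img (fun x => RApp (sbag (RLam x)) (RBag b)) T).
Proof.
  intro H. exists (fun w => exists t', T t' /\ lsub 0 t' (bag_list b) w). split.
  - now apply reduces_into_red, lsub_reduces_into.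
  - apply reduces_into_red. split.
    + intros ? [x [Hx ->]]. eexists. split; [apply rs_beta|]. intros w Hw. exists x; auto.
    + intros w [t' [Ht' Hw]].
      eexists _, _. split; [exists t'; auto | split; [apply rs_beta | auto]].
Qed.

Lemma peak_beta_arg t b l1 r l2 R : bag_list b = l1 ++ RLam r :: l2 -> rstep r R ->
  joinable rstep (lsub 0 t (bag_list b))
    (img (fun x => RApp (sbag (RLam t)) (RBag (lbag (l1 ++ RLam x :: l2)))) R).
Proof.
  intros -> H. exists (fun w => exists r', R r' /\ lsub 0 t (l1 ++ RLam r' :: l2) w). split.
  - apply reduces_into_red.
    destruct (lsub_arg_reduces_into 0 t _ _ (l1 ++ l2) (rvs_lam _ _ H)) as [H1 H2]. split.
    + intros u Hu. destruct (H1 u) as [U [HU HUG]]; [eapply lsub_perm; eauto; perm_solve|].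
      exists U. split; auto. intros w Hw. destruct (HUG w Hw) as [? [[r' [Hr' ->]] Hw']].
      exists r'. split; auto. eapply lsub_perm; eauto. perm_solve.
    + intros w [r' [Hr' Hw]]. destruct (H2 w) as [u [U [Hu [HU HUw]]]].
      { eexists. split; [exists r'; eauto|]. eapply lsub_perm; eauto. perm_solve. }
      exists u, U. split; auto. eapply lsub_perm; eauto. perm_solve.
  - apply reduces_into_red. split.
    + intros ? [x [Hx ->]]. eexists. split; [apply rs_beta|].
      intros w Hw. rewrite bag_list_lbag in Hw. eauto.
    + intros w [r' [Hr' Hw]]. eexists _, _. split; [exists r'; eauto|].
      split; [apply rs_beta | now rewrite bag_list_lbag].
Qed.

Lemma peak_zero_fun b u l1 t l2 T : bag_list b = l1 ++ RLam t :: l2 -> length (bag_list b) <> 1 ->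
  joinable rstep (fun _ => False) (img (fun x => RApp (RBag (lbag (l1 ++ RLam x :: l2))) u) T).
Proof.
  intros Eb Hl. exists (fun _ => False). split; apply reduces_into_red; split; try easy.
  intros ? [x [Hx ->]]. exists (fun _ => False). split; auto. apply rs_zero.
  rewrite bag_list_lbag. rewrite Eb, !length_app in *. auto.
Qed.

Lemma peak_zero_arg b U : length (bag_list b) <> 1 ->
  joinable rstep (fun _ => False) (img (fun x => RApp (RBag b) x) U).
Proof.
  intros Hl. exists (fun _ => False). split; apply reduces_into_red; split; try easy.
  intros ? [x [Hx ->]]. exists (fun _ => False). split; auto. now apply rs_zero.
Qed.

Lemma peak_app_app s S u U : rstep s S -> rstep u U ->
  joinable rstep (img (fun x => RApp x u) S) (img (fun x => RApp s x) U).
Proof.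
  intros HS HU. exists (fun w => exists x y, S x /\ U y /\ w = RApp x y).
  split; apply reduces_into_red; split.
  - intros ? [x [Hx ->]]. exists (img (fun z => RApp x z) U). split; [now apply rs_appr|].
    intros ? [z [Hz ->]]. eauto.
  - intros ? [x [y [Hx [Hy ->]]]]. exists (RApp x u), (img (fun z => RApp x z) U).
    split; [exists x; auto | split; [now apply rs_appr | exists y; auto]].
  - intros ? [y [Hy ->]]. exists (img (fun z => RApp z y) S). split; [now apply rs_appl|].
    intros ? [z [Hz ->]]. eauto.
  - intros ? [x [y [Hx [Hy ->]]]]. exists (RApp s y), (img (fun z => RApp z y) S).
    split; [exists y; auto | split; [now apply rs_appl | exists x; auto]].
Qed.

Lemma peak_bag_bag l1 t p s l2 T S : rstep t T -> rstep s S ->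
  joinable rstep (img (fun x => RBag (lbag (l1 ++ RLam x :: p ++ RLam s :: l2))) T)
    (img (fun y => RBag (lbag (l1 ++ RLam t :: p ++ RLam y :: l2))) S).
Proof.
  intros HT HS.
  assert (Hpos : forall x y,
    l1 ++ RLam x :: p ++ RLam y :: l2 = (l1 ++ RLam x :: p) ++ RLam y :: l2)
    by (intros; now rewrite <- app_assoc).
  exists (fun w => exists x y, T x /\ S y /\ w = RBag (lbag (l1 ++ RLam x :: p ++ RLam y :: l2))).
  split; apply reduces_into_red; split.
  - intros ? [x [Hx ->]]. rewrite Hpos.
    exists (img (fun y => RBag (lbag ((l1 ++ RLam x :: p) ++ RLam y :: l2))) S).
    split; [now apply ctx_bag|]. intros ? [y [Hy ->]]. exists x, y. rewrite Hpos. auto.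
  - intros ? [x [y [Hx [Hy ->]]]]. exists (RBag (lbag (l1 ++ RLam x :: p ++ RLam s :: l2))),
      (img (fun y => RBag (lbag ((l1 ++ RLam x :: p) ++ RLam y :: l2))) S).
    split; [exists x; auto|]. rewrite Hpos.
      split; [now apply ctx_bag | exists y; rewrite Hpos; auto].
  - intros ? [y [Hy ->]]. exists (img (fun x => RBag (lbag (l1 ++ RLam x :: p ++ RLam y :: l2))) T).
    split; [now apply ctx_bag|]. intros ? [x [Hx ->]]. eauto.
  - intros ? [x [y [Hx [Hy ->]]]]. exists (RBag (lbag (l1 ++ RLam t :: p ++ RLam y :: l2))),
      (img (fun x => RBag (lbag (l1 ++ RLam x :: p ++ RLam y :: l2))) T).
    split; [exists y; auto | split; [now apply ctx_bag | exists x; auto]].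
Qed.

Lemma peak_root_left s u E S : root_step (RApp s u) E -> rstep s S ->
  joinable rstep E (img (fun x => RApp x u) S).
Proof.
  intros HR HS. inversion HR; subst.
  - apply rstep_sing_inv in HS as [t0 [T [[= ->] [HT ->]]]].
    rewrite img_img. now apply peak_beta_body.
  - apply rstep_bag_inv in HS as [l1 [t [l2 [T [Eb [HT ->]]]]]].
    rewrite img_img. eapply peak_zero_fun; eauto.
  - apply rstep_app_inv in HS as [R1 | [[S1 [HS1 ->]] | [U1 [HU1 ->]]]].
    + inversion R1; subst; [apply peak_sigma1_beta | easy | apply peak_sigma1_sigma3].
    + apply rstep_sing_inv in HS1 as [t0 [T [[= ->] [HT ->]]]].
      rewrite !img_img. now apply peak_sigma1_fun.
    + rewrite img_img. now apply peak_sigma1_arg1.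
  - apply rstep_sing_inv in HS as [r [R [-> [HR' ->]]]].
    rewrite img_img. now apply peak_sigma3_val.
Qed.

Lemma peak_root_right s u E U : root_step (RApp s u) E -> rstep u U ->
  joinable rstep E (img (fun x => RApp s x) U).
Proof.
  intros HR HU. inversion HR; subst.
  - apply rstep_bag_inv in HU as [l1 [t0 [l2 [T [Eb [HT ->]]]]]].
    rewrite img_img. eapply peak_beta_arg; eauto.
  - now apply peak_zero_arg.
  - now apply peak_sigma1_arg2.
  - apply rstep_app_inv in HU as [R1 | [[S1 [HS1 ->]] | [U1 [HU1 ->]]]].
    + inversion R1; subst; [apply peak_sigma3_beta | easy | apply peak_sigma3_sigma3].
    + apply rstep_sing_inv in HS1 as [t0 [T [[= ->] [HT ->]]]].
      rewrite !img_img. now apply peak_sigma3_body.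
    + rewrite img_img. now apply peak_sigma3_arg.
Qed.

Lemma lt_mu_appl s u : lt_mu s (RApp s u).
Proof. left. simpl. lia. Qed.

Lemma lt_mu_appr s u : lt_mu u (RApp s u).
Proof. left. simpl. lia. Qed.

Lemma lt_mu_bag b l1 t l2 : bag_list b = l1 ++ RLam t :: l2 -> lt_mu t (RBag b).
Proof.
  intro E. left. simpl. rewrite bsize_vsum, E. unfold vsum. rewrite map_app, list_sum_app.
  simpl. lia.
Qed.

Lemma bag_ctx_assoc l1 t p l2 :
  (fun y => RBag (lbag ((l1 ++ RLam t :: p) ++ RLam y :: l2))) =
  (fun y => RBag (lbag (l1 ++ RLam t :: p ++ RLam y :: l2))).
Proof. apply functional_extensionality. intro. now rewrite <- app_assoc. Qed.

Theorem rstep_locally_confluent : locally_confluent rstep.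
Proof.
  intro e. induction e as [e IH] using (well_founded_ind lt_mu_wf). intros E1 E2 H1 H2.
  destruct e as [s u | b].
  - destruct (rstep_app_inv _ _ _ H1) as [R1 | [[S1 [HS1 ->]] | [U1 [HU1 ->]]]];
    destruct (rstep_app_inv _ _ _ H2) as [R2 | [[S2 [HS2 ->]] | [U2 [HU2 ->]]]];
    try solve [ now apply (peak_root_left s u) | now apply (peak_root_right s u)
              | now apply peak_app_app | apply joinable_sym; now apply (peak_root_left s u)
              | apply joinable_sym; now apply (peak_root_right s u)
              | apply joinable_sym; now apply peak_app_app ].
    + rewrite (root_step_det _ _ _ R1 R2). exists E2. split; apply reduces_into_refl.
    + destruct (IH s (lt_mu_appl s u) S1 S2 HS1 HS2) as [G [J1 J2]].
      exists (img (fun x => RApp x u) G).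
      split; apply reduces_into_ctx; auto using rstep_wf, ctx_appl.
    + destruct (IH u (lt_mu_appr s u) U1 U2 HU1 HU2) as [G [J1 J2]].
      exists (img (fun x => RApp s x) G).
      split; apply reduces_into_ctx; auto using rstep_wf, ctx_appr.
  - destruct (rstep_bag_inv _ _ H1) as [l1 [t [l2 [T [Eb [HT ->]]]]]].
    destruct (rstep_bag_inv _ _ H2) as [m1 [s [m2 [S [Eb' [HS ->]]]]]].
    rewrite Eb in Eb'.
    destruct (app_cons_eq_inv _ _ _ _ _ _ Eb') as [[-> [[= ->] ->]] | [[p [-> ->]] | [p [-> ->]]]].
    + destruct (IH _ (lt_mu_bag _ _ _ _ Eb) T S HT HS) as [G [J1 J2]].
      exists (img (fun x => RBag (lbag (m1 ++ RLam x :: m2))) G).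
      split; apply reduces_into_ctx; auto using rstep_wf, ctx_bag.
    + rewrite bag_ctx_assoc. now apply peak_bag_bag.
    + apply joinable_sym. rewrite bag_ctx_assoc. now apply peak_bag_bag.
Qed.

(** * Normal forms of simple terms *)

Notation rnf := (nf rstep).
Notation rnfs := (nfs rstep).

Lemma rnf_step x E : rstep x E -> forall t, rnf x t <-> rnfs E t.
Proof. exact (nf_step rstep rstep_wf rstep_locally_confluent x E). Qed.

Lemma rnf_step_eq x y : rstep x (eq y) -> forall t, rnf x t <-> rnf y t.
Proof. exact (nf_step_eq rstep rstep_wf rstep_locally_confluent x y). Qed.

Lemma rnf_ctx C x :
  closed_ctx rstep C -> forall t, rnf (C x) t <-> exists x', rnf x x' /\ rnf (C x') t.
Proof. exact (nf_ctx rstep rstep_wf rstep_locally_confluent C x). Qed.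

Lemma NFset_rnfs E t : NFset E t <-> rnfs E t.
Proof.
  split.
  - intros [e [F [He [[HR HN] Ht]]]]. exists e. split; auto.
    now apply (nf_set_reduction rstep rstep_wf rstep_locally_confluent e F).
  - intros [e [He Ht]].
    destruct (set_reduction_exists rstep rstep_wf (proj1 rstep_finite) e) as [F [HR HN]].
    exists e, F. repeat split; auto.
    now apply (nf_set_reduction rstep rstep_wf rstep_locally_confluent e F).
Qed.

Lemma rnf_app s u t : rnf (RApp s u) t <-> exists s' u', rnf s s' /\ rnf u u' /\ rnf (RApp s' u') t.
Proof.
  rewrite (rnf_ctx (fun x => RApp x u) s (ctx_appl u) t). split.
  - intros [s' [Hs Ht]].
    apply (rnf_ctx (fun x => RApp s' x) u (ctx_appr s')) in Ht as [u' [Hu Ht]]. eauto.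
  - intros [s' [u' [Hs [Hu Ht]]]]. exists s'. split; auto.
    apply (rnf_ctx (fun x => RApp s' x) u (ctx_appr s')). eauto.
Qed.

Lemma rnf_zero b u t : length (bag_list b) <> 1 -> ~ rnf (RApp (RBag b) u) t.
Proof. intros Hl Ht. apply (rnf_step _ _ (rs_zero b u Hl)) in Ht as [? [[] _]]. Qed.

Lemma rnf_zero_fun b u s t : length (bag_list b) <> 1 -> ~ rnf (RApp (RApp (RBag b) u) s) t.
Proof. intros Hl Ht. apply rnf_app in Ht as [s' [u' [Hs _]]]. eapply rnf_zero; eauto. Qed.

Definition rnfv (v : rval) : rval -> Prop :=
  match v with
  | RVar x => eq (RVar x)
  | RLam t => fun v' => exists t', rnf t t' /\ v' = RLam t'
  end.

Definition vnormal (v : rval) : Prop := match v with RVar _ => True | RLam t => rnormal t end.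

Lemma normal_bag l : Forall vnormal l -> rnormal (RBag (lbag l)).
Proof.
  intros Hl E HE. apply rstep_bag_inv in HE as [l1 [t [l2 [T [Eb [HT _]]]]]].
  rewrite bag_list_lbag in Eb. subst. apply Forall_elt in Hl. exact (Hl T HT).
Qed.

Lemma rnfv_vnormal v v' : rnfv v v' -> vnormal v'.
Proof. destruct v; simpl; [now intros <- | intros [t' [Ht ->]]; eapply nf_normal; eauto]. Qed.

Lemma rnf_bag_elem k v l t :
  rnf (RBag (lbag (k ++ v :: l))) t <-> exists v', rnfv v v' /\ rnf (RBag (lbag (k ++ v' :: l))) t.
Proof.
  destruct v as [x | r]; simpl.
  - split; [eauto | now intros [? [<- Ht]]].
  - rewrite (rnf_ctx (fun x => RBag (lbag (k ++ RLam x :: l))) r (ctx_bag k l) t). split.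
    + intros [r' [Hr Ht]]. eauto.
    + intros [? [[r' [Hr ->]] Ht]]. eauto.
Qed.

Lemma rnf_bag_prefix l : forall k, Forall vnormal k -> forall t,
  rnf (RBag (lbag (k ++ l))) t <-> exists l', Forall2 rnfv l l' /\ t = RBag (lbag (k ++ l')).
Proof.
  induction l as [|v l IH]; intros k Hk t.
  - rewrite app_nil_r, (nf_of_normal _ _ (normal_bag k Hk)). split.
    + intros ->. exists []. now rewrite app_nil_r.
    + intros [l' [Hl ->]]. inversion Hl. now rewrite app_nil_r.
  - assert (Hk' : forall v', rnfv v v' -> Forall vnormal (k ++ [v'])).
    { intros v' Hv. apply Forall_app. split; auto. constructor; auto.
      now apply rnfv_vnormal with v. }
    rewrite rnf_bag_elem. split.
    + intros [v' [Hv Ht]]. rewrite app_cons_snoc, (IH _ (Hk' v' Hv)) in Ht.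
      destruct Ht as [l' [Hl ->]]. exists (v' :: l'). rewrite <- app_cons_snoc. auto.
    + intros [? [Hl ->]]. inversion Hl as [|? v' ? l' Hv Hl']; subst.
      exists v'. split; auto. rewrite app_cons_snoc, (IH _ (Hk' v' Hv)).
      exists l'. rewrite <- app_cons_snoc. auto.
Qed.

Lemma rnf_bag b t :
  rnf (RBag b) t <-> exists l', Forall2 rnfv (bag_list b) l' /\ t = RBag (lbag l').
Proof.
  rewrite <- (lbag_bag_list b) at 1. exact (rnf_bag_prefix (bag_list b) [] (Forall_nil _) t).
Qed.

(** * Taylor expansion *)

Definition taylor_val (V : lterm) : rval -> Prop :=
  match V with
  | LVar x => fun v => v = RVar x
  | LLam N => fun v => exists u, v = RLam u /\ taylor N u
  | LApp _ _ => fun _ => False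
  end.

Lemma taylor_value V w :
  is_value V -> taylor V w <-> exists b, w = RBag b /\ bag_all (taylor_val V) b.
Proof. now destruct V. Qed.

Lemma bag_all_Forall P b : bag_all P b <-> Forall P (bag_list b).
Proof.
  induction b; simpl. { split; auto. }
  rewrite IHb. split; [intros [? ?]; now constructor | intro H; now inversion H].
Qed.

Lemma bag_all_blift k c (P Q : rval -> Prop) : (forall v, Q v <-> img (vlift k c) P v) ->
  forall b, bag_all Q b <-> img (blift k c) (bag_all P) b.
Proof.
  intros H b. induction b as [|v b IH]; simpl.
  - split; auto. intros _. now exists BNil.
  - rewrite IH, H. split.
    + intros [[v0 [Hv0 ->]] [b0 [Hb0 ->]]]. now exists (BCons v0 b0).
    + intros [[|v0 b0] [Hb E]]; simpl in *; inversion E; subst. destruct Hb.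
      split; eexists; eauto.
Qed.

Lemma taylor_lift M : forall k c w, taylor (llift k c M) w <-> img (rlift k c) (taylor M) w.
Proof.
  induction M as [m | N IH | P IHP Q IHQ]; intros k c w; simpl.
  - assert (HQ : forall v, v = RVar (if c <=? m then m + k else m) <->
                 img (vlift k c) (fun v => v = RVar m) v).
    { intro v. unfold img. split.
      - intros ->. exists (RVar m). split; auto. simpl. now destruct (c <=? m).
      - intros [? [-> ->]]. simpl. now destruct (c <=? m). }
    replace (if c <=? m then LVar (m + k) else LVar m)
      with (LVar (if c <=? m then m + k else m)) by now destruct (c <=? m).
    simpl. setoid_rewrite (bag_all_blift k c _ _ HQ). unfold img. split.
    + intros [b [-> [b0 [Hb0 ->]]]]. exists (RBag b0). eauto.
    + intros [? [[b0 [-> Hb0]] ->]]. exists (blift k c b0). eauto.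
  - assert (HQ : forall v, (exists u, v = RLam u /\ taylor (llift k (S c) N) u) <->
                 img (vlift k c) (fun v => exists u, v = RLam u /\ taylor N u) v).
    { intro v. unfold img. setoid_rewrite IH. split.
      - intros [u [-> [u0 [Hu0 ->]]]]. exists (RLam u0). eauto.
      - intros [? [[u0 [-> Hu0]] ->]]. eexists. split; [reflexivity|]. eexists; eauto. }
    setoid_rewrite (bag_all_blift k c _ _ HQ). unfold img. split.
    + intros [b [-> [b0 [Hb0 ->]]]]. exists (RBag b0). eauto.
    + intros [? [[b0 [-> Hb0]] ->]]. exists (blift k c b0). eauto.
  - unfold img. setoid_rewrite IHP. setoid_rewrite IHQ. split.
    + intros [s [u [-> [[s0 [Hs0 ->]] [u0 [Hu0 ->]]]]]]. exists (RApp s0 u0). eauto 7.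
    + intros [? [[s [u [-> [Hs Hu]]]] ->]]. exists (rlift k c s), (rlift k c u).
      split; [reflexivity | split; eexists; eauto].
Qed.

Lemma bag_all_lsubb d (P Q R : rval -> Prop) :
  (forall w, Q w <-> exists v vs, P v /\ Forall R vs /\ lsubv d v vs w) ->
  forall b, bag_all Q b <-> exists bx vs, bag_all P bx /\ Forall R vs /\ lsubb d bx vs b.
Proof.
  intros HQ b. split.
  - induction b as [|w b IH]; simpl.
    + intros _. exists BNil, []. repeat split; constructor.
    + intros [Hw Hb]. apply HQ in Hw as [v [vs [Hv [Hvs Hl]]]].
      destruct (IH Hb) as [bx [vs' [Hbx [Hvs' Hl']]]].
      exists (BCons v bx), (vs ++ vs'). repeat split; auto.
      * now apply Forall_app.
      * eapply lsb_cons; eauto.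
  - intros [bx [vs [Hbx [Hvs Hl]]]]. revert Hbx Hvs.
    induction Hl as [|d' v bx vs vs1 vs2 v' b' P12 Hv Hb IH]; simpl; auto.
    intros [Pv Pbx] Hvs. apply (Permutation_Forall P12), Forall_app in Hvs as [Hvs1 Hvs2].
    split; auto. apply HQ. eauto.
Qed.

Lemma taylor_subst_bags d (P Q R : rval -> Prop) :
  (forall w, Q w <-> exists v vs, P v /\ Forall R vs /\ lsubv d v vs w) ->
  forall w, (exists b, w = RBag b /\ bag_all Q b) <->
    exists t vs, (exists b, t = RBag b /\ bag_all P b) /\ Forall R vs /\ lsub d t vs w.
Proof.
  intros HQ w. setoid_rewrite (bag_all_lsubb d P Q R HQ). split.
  - intros [b [-> [bx [vs [Hbx [Hvs Hl]]]]]]. exists (RBag bx), vs. repeat split; eauto.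
    now constructor.
  - intros [? [vs [[bx [-> Hbx]] [Hvs Hl]]]]. inversion Hl; subst. eauto 7.
Qed.

Lemma taylor_subst V M : is_value V -> forall d w,
  taylor (lsubst d V M) w <-> exists t vs, taylor M t /\ Forall (taylor_val V) vs /\ lsub d t vs w.
Proof.
  intro HV. induction M as [m | N IH | P IHP Q IHQ]; intros d w.
  - simpl lsubst. destruct (Nat.eqb_spec m d) as [-> | Hne].
    + rewrite taylor_lift. unfold img. setoid_rewrite (taylor_value V _ HV).
      transitivity (exists b, w = RBag b /\ bag_all (img (vlift d 0) (taylor_val V)) b).
      * setoid_rewrite (bag_all_blift d 0 _ _ (fun v => iff_refl _)). unfold img. split.
        -- intros [? [[b [-> Hb]] ->]]. exists (blift d 0 b). eauto.
        -- intros [? [-> [b [Hb ->]]]]. eauto.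
      * apply taylor_subst_bags. intro w'. split.
        -- intros [v [Hv ->]]. exists (RVar d), [v]. repeat split; auto. constructor.
        -- intros [? [vs [-> [Hvs Hl]]]]. inversion Hl; subst; try lia.
           inversion Hvs. eexists; eauto.
    + replace (if d <? m then LVar (pred m) else LVar m)
        with (LVar (if d <? m then pred m else m)) by now destruct (d <? m).
      apply taylor_subst_bags. intro w'. split.
      * intros ->. exists (RVar m), []. repeat split; auto.
        destruct (Nat.ltb_spec d m); [apply lsv_gt | apply lsv_lt]; lia.
      * intros [? [vs [-> [Hvs Hl]]]]. inversion Hl; subst; try lia;
          destruct (Nat.ltb_spec d m); f_equal; lia.
  - apply taylor_subst_bags. intro w'. split.
    + intros [u [-> Hu]]. apply IH in Hu as [t [vs [Ht [Hvs Hl]]]].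
      exists (RLam t), vs. repeat split; eauto. now constructor.
    + intros [? [vs [[t [-> Ht]] [Hvs Hl]]]]. inversion Hl; subst.
      eexists. split; [reflexivity|]. apply IH. eauto.
  - simpl. split.
    + intros [s [u [-> [Hs Hu]]]]. apply IHP in Hs as [t1 [vs1 [? [? ?]]]].
      apply IHQ in Hu as [t2 [vs2 [? [? ?]]]].
      exists (RApp t1 t2), (vs1 ++ vs2). repeat split; eauto.
      * now apply Forall_app.
      * eapply lsub_app; eauto.
    + intros [? [vs [[s [u [-> [Hs Hu]]]] [Hvs Hl]]]].
      inversion Hl as [? ? ? ? vs1 vs2 s' u' Pvs Hs' Hu' |]; subst.
      apply (Permutation_Forall Pvs), Forall_app in Hvs as [Hvs1 Hvs2].
      exists s', u'. split; auto. split; [apply IHP | apply IHQ]; eauto.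
Qed.

(** * Invariance of NF(T(M)) under call-by-value reduction *)

Definition nf_taylor (M : lterm) : rset := rnfs (taylor M).

Lemma bag_sing_cases b : (exists v, b = sing v) \/ length (bag_list b) <> 1.
Proof. destruct b as [|v [|w b]]; simpl; auto. left. now exists v. Qed.

Lemma nf_taylor_app P Q t :
  nf_taylor (LApp P Q) t <-> exists s' u', nf_taylor P s' /\ nf_taylor Q u' /\ rnf (RApp s' u') t.
Proof.
  unfold nf_taylor, nfs. simpl. split.
  - intros [e [[s [u [-> [Hs Hu]]]] Ht]]. apply rnf_app in Ht as [s' [u' [H1 [H2 H3]]]].
    exists s', u'. repeat split; eauto.
  - intros [s' [u' [[s [Hs H1]] [[u [Hu H2]] H3]]]]. exists (RApp s u).
    split; [eauto | apply rnf_app; eauto].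
Qed.

Lemma nf_taylor_lam M t : nf_taylor (LLam M) t <->
  exists l', Forall (fun v => exists f, v = RLam f /\ nf_taylor M f) l' /\ t = RBag (lbag l').
Proof.
  unfold nf_taylor at 1, nfs. simpl. split.
  - intros [? [[b [-> Hb]] Ht]]. apply rnf_bag in Ht as [l' [Hl ->]]. exists l'. split; auto.
    apply bag_all_Forall in Hb. clear - Hb Hl. induction Hl as [|v v' l l' Hv Hl IH]; auto.
    inversion Hb as [|? ? [u [-> Hu]] Hb']; subst. destruct Hv as [f [Hf ->]].
    constructor; auto. exists f. split; auto. exists u; auto.
  - intros [l' [Hl ->]].
    assert (Hb : exists b, bag_all (fun v => exists u, v = RLam u /\ taylor M u) b /\
                           Forall2 rnfv (bag_list b) l').
    { induction Hl as [|v l' [f [-> [u [Hu Hf]]]] _ [b [Hb Hbl]]].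
      - now exists BNil.
      - exists (BCons (RLam u) b). simpl. split; [split; eauto | constructor; simpl; eauto]. }
    destruct Hb as [b [Hb Hbl]]. exists (RBag b). split; [eauto | apply rnf_bag; eauto].
Qed.

Lemma nf_taylor_beta M V : is_value V -> forall t,
  nf_taylor (LApp (LLam M) V) t <-> nf_taylor (lsubst 0 V M) t.
Proof.
  intros HV t. unfold nf_taylor, nfs.
  setoid_rewrite (taylor_subst V M HV 0). simpl. split.
  - intros [e [[s [u [-> [[b1 [-> Hb1]] Hu]]]] Ht]].
    apply (taylor_value _ _ HV) in Hu as [b2 [-> Hb2]].
    destruct (bag_sing_cases b1) as [[v ->] | Hlen]; [| now apply rnf_zero in Ht].
    destruct Hb1 as [[t0 [-> Ht0]] _].
    apply (rnf_step _ _ (rs_beta t0 b2)) in Ht as [w [Hw Ht]].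
    exists w. split; auto. exists t0, (bag_list b2). rewrite <- bag_all_Forall. auto.
  - intros [w [[t0 [vs [Ht0 [Hvs Hw]]]] Ht]].
    exists (RApp (sbag (RLam t0)) (RBag (lbag vs))). split.
    + exists (sbag (RLam t0)), (RBag (lbag vs)). repeat split.
      * exists (sing (RLam t0)). simpl. eauto.
      * apply (taylor_value _ _ HV). eexists. split; [reflexivity|].
        now rewrite bag_all_Forall, bag_list_lbag.
    + apply (rnf_step _ _ (rs_beta t0 (lbag vs))). exists w. rewrite bag_list_lbag. auto.
Qed.

Lemma nf_taylor_sigma1 M N P t :
  nf_taylor (LApp (LApp (LLam M) N) P) t <-> nf_taylor (LApp (LLam (LApp M (llift 1 0 P))) N) t.
Proof.
  transitivity (exists t0 s1 s2, taylor M t0 /\ taylor N s1 /\ taylor P s2 /\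
                 rnf (RApp (sbag (RLam (RApp t0 (rlift 1 0 s2)))) s1) t);
    unfold nf_taylor, nfs; simpl; split.
  - intros [e [[s [s2 [-> [[s' [s1 [-> [[b1 [-> Hb1]] Hs1]]]] Hs2]]]] Ht]].
    destruct (bag_sing_cases b1) as [[v ->] | Hlen]; [| now apply rnf_zero_fun in Ht].
    destruct Hb1 as [[t0 [-> Ht0]] _].
    apply (rnf_step_eq _ _ (rs_sigma1 t0 s1 s2)) in Ht. eauto 8.
  - intros [t0 [s1 [s2 [Ht0 [Hs1 [Hs2 Ht]]]]]].
    exists (RApp (RApp (sbag (RLam t0)) s1) s2). split.
    + exists (RApp (sbag (RLam t0)) s1), s2. repeat split; auto.
      exists (sbag (RLam t0)), s1. repeat split; auto. exists (sing (RLam t0)). simpl. eauto.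
    + now apply (rnf_step_eq _ _ (rs_sigma1 t0 s1 s2)).
  - intros [t0 [s1 [s2 [Ht0 [Hs1 [Hs2 Ht]]]]]].
    eexists. split; [|exact Ht]. eexists _, s1. repeat split; auto.
    exists (sing (RLam (RApp t0 (rlift 1 0 s2)))). simpl. repeat split; auto.
    eexists. split; [reflexivity|]. exists t0, (rlift 1 0 s2). repeat split; auto.
    apply taylor_lift. eexists; eauto.
  - intros [e [[s [s1 [-> [[b [-> Hb]] Hs1]]]] Ht]].
    destruct (bag_sing_cases b) as [[v ->] | Hlen]; [| now apply rnf_zero in Ht].
    destruct Hb as [[r [-> [t0 [s2' [-> [Ht0 Hs2]]]]]] _].
    apply taylor_lift in Hs2 as [s2 [Hs2 ->]]. eauto 8.
Qed.

Lemma nf_taylor_sigma3 V M N : is_value V -> forall t,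
  nf_taylor (LApp V (LApp (LLam M) N)) t <-> nf_taylor (LApp (LLam (LApp (llift 1 0 V) M)) N) t.
Proof.
  intros HV t.
  transitivity (exists v t0 s0, taylor_val V v /\ taylor M t0 /\ taylor N s0 /\
                 rnf (RApp (sbag (RLam (RApp (sbag (vlift 1 0 v)) t0))) s0) t);
    unfold nf_taylor, nfs; simpl; split.
  - intros [e [[s [u [-> [Hs [s' [s0 [-> [[b1 [-> Hb1]] Hs0]]]]]]]] Ht]].
    apply (taylor_value _ _ HV) in Hs as [bv [-> Hbv]].
    destruct (bag_sing_cases bv) as [[v ->] | Hlen]; [| now apply rnf_zero in Ht].
    destruct (bag_sing_cases b1) as [[w ->] | Hlen1].
    + destruct Hb1 as [[t0 [-> Ht0]] _], Hbv as [Hv _].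
      apply (rnf_step_eq _ _ (rs_sigma3 v t0 s0)) in Ht. eauto 8.
    + apply rnf_app in Ht as [? [? [_ [Hu _]]]]. now apply rnf_zero in Hu.
  - intros [v [t0 [s0 [Hv [Ht0 [Hs0 Ht]]]]]].
    exists (RApp (sbag v) (RApp (sbag (RLam t0)) s0)). split.
    + exists (sbag v), (RApp (sbag (RLam t0)) s0). repeat split; auto.
      * apply (taylor_value _ _ HV). exists (sing v). simpl. auto.
      * exists (sbag (RLam t0)), s0. repeat split; auto. exists (sing (RLam t0)). simpl. eauto.
    + now apply (rnf_step_eq _ _ (rs_sigma3 v t0 s0)).
  - intros [v [t0 [s0 [Hv [Ht0 [Hs0 Ht]]]]]].
    eexists. split; [|exact Ht]. eexists _, s0. repeat split; auto.
    eexists. simpl. split; [reflexivity|]. split; auto.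
    eexists. split; [reflexivity|]. exists (sbag (vlift 1 0 v)), t0. repeat split; auto.
    apply taylor_lift. exists (sbag v). split; auto.
    apply (taylor_value _ _ HV). exists (sing v). simpl. auto. exact I.
  - intros [e [[s [s0 [-> [[b [-> Hb]] Hs0]]]] Ht]].
    destruct (bag_sing_cases b) as [[v ->] | Hlen]; [| now apply rnf_zero in Ht].
    destruct Hb as [[r [-> [w [t0 [-> [Hw Ht0]]]]]] _].
    apply taylor_lift in Hw as [w0 [Hw0 ->]].
    apply (taylor_value _ _ HV) in Hw0 as [bv [-> Hbv]].
    destruct (bag_sing_cases bv) as [[v' ->] | Hlen].
    + destruct Hbv as [Hv' _]. eauto 8.
    + exfalso. apply rnf_app in Ht as [x [_ [Hx _]]].
      apply rnf_bag in Hx as [l' [Hl _]]. inversion Hl as [|? ? ? ? Hr]; subst.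
      destruct Hr as [t' [Ht' _]]. apply rnf_zero in Ht'; auto.
      simpl. now rewrite bag_list_blift, length_map.
Qed.

Lemma nf_taylor_vstep M N : vstep M N -> forall t, nf_taylor M t <-> nf_taylor N t.
Proof.
  induction 1; intro t.
  - now apply nf_taylor_beta.
  - apply nf_taylor_sigma1.
  - now apply nf_taylor_sigma3.
  - rewrite !nf_taylor_lam. split; intros [l' [Hl ->]]; exists l'; split; auto;
      eapply Forall_impl; try exact Hl; intros v [f [-> Hf]]; exists f; split; auto;
      now apply IHvstep.
  - rewrite !nf_taylor_app. setoid_rewrite IHvstep. reflexivity.
  - rewrite !nf_taylor_app. setoid_rewrite IHvstep. reflexivity.
Qed.

Lemma nf_taylor_veq M N : veq M N -> forall t, nf_taylor M t <-> nf_taylor N t.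
Proof.
  induction 1 as [M N H | M | M N _ IH | M N P _ IH1 _ IH2]; intro t.
  - now apply nf_taylor_vstep.
  - reflexivity.
  - now rewrite IH.
  - now rewrite IH1.
Qed.

Theorem corollary4p5 (M N : lterm) :
  veq M N -> rset_eq (NFset (taylor M)) (NFset (taylor N)).
Proof.
  intros H t. unfold rset_eq. setoid_rewrite NFset_rnfs.
  split; intros [t' [Ht' Htt']]; exists t'; split; auto; apply (nf_taylor_veq M N H); auto.
Qed.
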